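(* Assume $f_1$ is $C^3$, $f_2$ is $C^2$, $\frac{D}{\gamma_2\lambda_Z(D)}>f_2'(\lambda_Z(D))$, and let $\mu_{c_2}>\mu_{c_1}(D,D)$ be a zero of $A$. Then there exist $\hat\delta>0$, a neighborhood $\Delta$ of $(D,D)$ and a constant $C$ such that the factor coefficient $\gamma(D_1,D_2)(\mu)$ is defined and differentiable in $\mu$ for $\mu\in[\mu_{c_2}-\hat\delta,\mu_{c_2}+\hat\delta]$, $(D_1,D_2)\in\Delta$, and $$\Bigl|\frac{\partial}{\partial\mu}\gamma(D_1,D_2)(\mu)-A'(\mu)\Bigr|\le C\,\|(D_1,D_2)-(D,D)\|$$ for all such $\mu$ and $(D_1,D_2)$, where $\|\cdot\|$ is the Euclidean norm.
   Context: Let $D,\gamma_1,\gamma_2>0$ and $f_1,f_2:[0,\infty)\to[0,\infty)$ bounded, continuously differentiable, $f_i(0)=0$, $f_i'>0$, with $\lim f_1>d/\gamma_1$, $\lim f_2>d/\gamma_2$ for all $d$ in a neighborhood of $D$. Consider the system $N'=(\mu-N)D-Pf_1(N)$, $P'=\gamma_1Pf_1(N)-D_1P-Zf_2(P)$, $Z'=\gamma_2Zf_2(P)-D_2Z$ with $D_1,D_2>0$. $\lambda_P(d),\lambda_Z(d)$ are defined by $f_1(\lambda_P(d))=d/\gamma_1$, $f_2(\lambda_Z(d))=d/\gamma_2$; $\mu_{c_1}(D_1,D_2)=\lambda_P(D_1)+D_1\lambda_Z(D_2)/(D\gamma_1)$. For $\mu>\mu_{c_1}(D_1,D_2)$, $N(\mu,D_1,D_2)$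 is the unique $N\in(0,\mu)$ with $(\mu-N)D-\lambda_Z(D_2)f_1(N)=0$, $Z(\mu,D_1,D_2)=(\gamma_2/D_2)\lambda_Z(D_2)(\gamma_1f_1(N)-D_1)$, and $E_2(\mu,D_1,D_2)=(N,\lambda_Z(D_2),Z)$. For $D_1=D_2=D$ set $A(\mu)=Z(\mu,D,D)\bigl(\frac{D}{\gamma_2\lambda_Z(D)}-f_2'(\lambda_Z(D))\bigr)-\lambda_Z(D)f_1'(N(\mu,D,D))$. The characteristic polynomial $\det(J-xI)$ of the Jacobian $J$ of the system at $E_2(\mu,D_1,D_2)$ is $p_0+p_1x+p_2x^2-x^3$ with $p_i=p_i(\mu,D_1,D_2)$; for $(D_1,D_2)=(D,D)$ and $\mu$ near $\mu_{c_2}$ it equals $(-D-x)(\beta_0(\mu)-A(\mu)x+x^2)$ with $A(\mu)^2-4\beta_0(\mu)<0$. Let $M:(\alpha,\beta,\gamma)\mapsto(\alpha\beta,-\alpha\gamma-\beta,\alpha+\gamma)$ be the multiplication map sending $(\alpha-x,\ \beta-\gamma x+x^2)$ (with $\alpha<0$, $\gamma^2-4\beta<0$) to the coefficients of their product; it is a local diffeomorphism. For $(\mu,D_1,D_2)$ near $(\mu_{c_2},D,D)$ define $(\alpha(D_1,D_2)(\mu),\beta(D_1,D_2)(\mu),\gamma(D_1,D_2)(\mu))$ as the image of $(p_0,p_1,p_2)(\mu,D_1,D_2)$ under the local inverse of $M$ near $(-D,\beta_0(\mu_{c_2}),A(\mu_{c_2}))$; thus the characteristic polynomial factors as $(\alpha(D_1,D_2)(\mu)-x)(\beta(D_1,D_2)(\mu)-\gamma(D_1,D_2)(\mu)x+x^2)$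 and $\gamma(D,D)(\mu)=A(\mu)$. *)

From Stdlib Require Import Reals Lra ClassicalEpsilon.
Open Scope R_scope.

Definition lim_infty (f : R -> R) (L : R) : Prop :=
  forall e, 0 < e -> exists M, forall x, M <= x -> Rabs (f x - L) < e.

(* lambda_P(d): f1(lambda_P(d)) = d/gamma1, lambda_P(d) >= 0 (unique, f1 strictly increasing) *)
Definition lamP (f1 : R -> R) (g1 d : R) : R :=
  epsilon (inhabits 0) (fun x => 0 <= x /\ f1 x = d / g1).

Definition lamZ (f2 : R -> R) (g2 d : R) : R :=
  epsilon (inhabits 0) (fun x => 0 <= x /\ f2 x = d / g2).

Definition mu_c1 (f1 f2 : R -> R) (D g1 g2 D1 D2 : R) : R :=
  lamP f1 g1 D1 + D1 * lamZ f2 g2 D2 / (D * g1).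

Definition Nfun (f1 f2 : R -> R) (D g2 mu D2 : R) : R :=
  epsilon (inhabits 0)
    (fun N => 0 < N < mu /\ (mu - N) * D - lamZ f2 g2 D2 * f1 N = 0).

Definition Zfun (f1 f2 : R -> R) (D g1 g2 mu D1 D2 : R) : R :=
  (g2 / D2) * lamZ f2 g2 D2 * (g1 * f1 (Nfun f1 f2 D g2 mu D2) - D1).

(* A(mu), with df1, df2 the derivatives of f1, f2 *)
Definition Afun (f1 f2 df1 df2 : R -> R) (D g1 g2 mu : R) : R :=
  Zfun f1 f2 D g1 g2 mu D D * (D / (g2 * lamZ f2 g2 D) - df2 (lamZ f2 g2 D))
  - lamZ f2 g2 D * df1 (Nfun f1 f2 D g2 mu D).

(* Coefficients (p0,p1,p2) of det(J - xI) = p0 + p1 x + p2 x^2 - x^3,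
   J the Jacobian of the vector field
     N' = (mu-N)D - P f1(N),
     P' = g1 P f1(N) - D1 P - Z f2(P),
     Z' = g2 Z f2(P) - D2 Z
   at E2(mu,D1,D2) = (N(mu,D1,D2), lambda_Z(D2), Z(mu,D1,D2)). *)
Definition charcoefs (f1 f2 df1 df2 : R -> R) (D g1 g2 mu D1 D2 : R) : R * R * R :=
  let N := Nfun f1 f2 D g2 mu D2 in
  let P := lamZ f2 g2 D2 in
  let Z := Zfun f1 f2 D g1 g2 mu D1 D2 in
  let j11 := - D - P * df1 N in
  let j12 := - f1 N in
  let j13 := 0 in
  let j21 := g1 * P * df1 N in
  let j22 := g1 * f1 N - D1 - Z * df2 P in
  let j23 := - f2 P in
  let j31 := 0 in
  let j32 := g2 * Z * df2 P in
  let j33 := g2 * f2 P - D2 in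
  let tr := j11 + j22 + j33 in
  let m2 := (j11 * j22 - j12 * j21) + (j11 * j33 - j13 * j31)
            + (j22 * j33 - j23 * j32) in
  let det := j11 * (j22 * j33 - j23 * j32) - j12 * (j21 * j33 - j23 * j31)
             + j13 * (j21 * j32 - j22 * j31) in
  (det, - m2, tr).

Definition Mmap (a b c : R) : R * R * R := (a * b, - a * c - b, a + c).

(* gamma(D1,D2)(mu): third component of the preimage of (p0,p1,p2) under M
   restricted to {alpha < 0, gamma^2 - 4 beta < 0} (on which M is injective,
   so this coincides with the local inverse of M). *)
Definition gammaF (f1 f2 df1 df2 : R -> R) (D g1 g2 D1 D2 mu : R) : R :=
  epsilon (inhabits 0)
    (fun g => exists a b, a < 0 /\ g ^ 2 - 4 * b < 0 /\
       Mmap a b g = charcoefs f1 f2 df1 df2 D g1 g2 mu D1 D2).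

(* Near (mu_c2, D, D) the characteristic cubic at E2 has an isolated real root
   alpha within D/28 of -D: at D1 = D2 = D the root is exactly -D, and since
   p1 < 0 and p2 = -D there (A(mu_c2) = 0) the cubic slopes down by at least
   D^2/2 around -D.  The cofactor quadratic has negative discriminant, so
   gamma = p2 - alpha; implicit differentiation of alpha gives gamma', and on
   the diagonal D1 = D2 = D, gamma = p2 + D = A, so gamma' = A'.  The estimate
   is then Lipschitz continuity of gamma' in (mu, D1, D2), obtained from a
   calculus of functions bounded and Lipschitz on a box ("box-Lipschitz"). *)
From Stdlib Require Import Reals Lra ClassicalEpsilon.
From Coquelicot Require Import Coquelicot.
Open Scope R_scope.

Lemma continuity_pt_eps (u : R -> R) x :
  continuity_pt u x <->
  forall e, 0 < e -> exists d, 0 < d /\ forall y, Rabs (y - x) < d -> Rabs (u y - u x) < e.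
Proof.
  split; intros H e He; destruct (H e He) as [d [Hd Hu]]; exists d; split; try lra.
  - intros y Hy. destruct (Req_dec y x) as [->|Hne].
    + rewrite Rminus_diag, Rabs_R0; lra.
    + apply Hu. repeat split; auto.
  - intros y [_ Hy]. exact (Hu y Hy).
Qed.

Lemma continuity_pt_lipschitz (u : R -> R) x r C : 0 < r ->
  (forall y, Rabs (y - x) < r -> Rabs (u y - u x) <= C * Rabs (y - x)) ->
  continuity_pt u x.
Proof.
  intros Hr Hlip. apply continuity_pt_eps. intros e He.
  set (C' := Rabs C + 1). assert (HC' : 0 < C') by (unfold C'; pose proof (Rabs_pos C); lra).
  exists (Rmin r (e / C')). split; [apply Rmin_pos; [lra | apply Rdiv_lt_0_compat; lra]|].
  intros y Hy. pose proof (Rmin_l r (e / C')). pose proof (Rmin_r r (e / C')).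
  assert (Hsmall : C' * Rabs (y - x) < e).
  { apply Rlt_le_trans with (C' * (e / C')); [apply Rmult_lt_compat_l; lra|].
    right; field; lra. }
  apply Rle_lt_trans with (C * Rabs (y - x)); [apply Hlip; lra|].
  pose proof (Rle_abs C). pose proof (Rabs_pos (y - x)). unfold C' in Hsmall. nra.
Qed.

Lemma derivable_continuous_pt_lim f x l : derivable_pt_lim f x l -> continuity_pt f x.
Proof. intro H. apply derivable_continuous_pt. exists l. exact H. Qed.

Lemma Rabs_le_norm2 a b : Rabs a <= sqrt (a ^ 2 + b ^ 2) /\ Rabs b <= sqrt (a ^ 2 + b ^ 2).
Proof.
  split; rewrite <- sqrt_Rsqr_abs; apply sqrt_le_1_alt; unfold Rsqr; simpl;
    [pose proof (pow2_ge_0 b) | pose proof (pow2_ge_0 a)]; simpl in *; lra.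
Qed.

Definition loc_lipschitz (f : R -> R) : Prop :=
  forall B, exists K, 0 <= K /\
    forall x y, Rabs x <= B -> Rabs y <= B -> Rabs (f x - f y) <= K * Rabs (x - y).

(* A C^1 function is locally Lipschitz (mean value theorem and a bound on
   the continuous derivative over [-B, B]). *)
Lemma C1_loc_lipschitz (f f' : R -> R) :
  (forall x, derivable_pt_lim f x (f' x)) -> (forall x, continuity_pt f' x) ->
  loc_lipschitz f.
Proof.
  intros Hd Hc B. destruct (Rle_lt_dec (-B) B) as [HB|HB].
  2:{ exists 0. split; [lra|]. intros x y Hx. pose proof (Rabs_pos x). lra. }
  destruct (continuity_ab_maj (fun x => Rabs (f' x)) (-B) B HB) as [M [HM _]].
  { intros c _. apply (continuity_pt_comp f' Rabs); [apply Hc | apply Rcontinuity_abs]. }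
  exists (Rabs (f' M)). split; [apply Rabs_pos|].
  intros x y Hx Hy. apply Rabs_le_between in Hx. apply Rabs_le_between in Hy.
  destruct (MVT_abs f f' y x) as [c [Hfc Hcxy]]; [intros c _; apply Hd|].
  rewrite Hfc. apply Rmult_le_compat_r; [apply Rabs_pos|]. apply HM.
  pose proof (Rmin_glb y x (-B) ltac:(lra) ltac:(lra)).
  pose proof (Rmax_lub y x B ltac:(lra) ltac:(lra)). lra.
Qed.

Lemma C2_loc_lipschitz (f f' f'' : R -> R) :
  (forall x, derivable_pt_lim f x (f' x)) -> (forall x, derivable_pt_lim f' x (f'' x)) ->
  loc_lipschitz f.
Proof.
  intros Hf Hf'. apply (C1_loc_lipschitz f f' Hf).
  intro x. exact (derivable_continuous_pt_lim _ _ _ (Hf' x)).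
Qed.

Lemma derivable_pt_lim_local f g x l r : 0 < r ->
  (forall y, Rabs (y - x) < r -> g y = f y) ->
  derivable_pt_lim f x l -> derivable_pt_lim g x l.
Proof.
  intros Hr Heq Hf e He. destruct (Hf e He) as [d Hd].
  assert (Hp : 0 < Rmin d r) by (apply Rmin_pos; [apply cond_pos | lra]).
  exists (mkposreal _ Hp). intros h Hh Hhd. simpl in Hhd.
  pose proof (Rmin_l d r). pose proof (Rmin_r d r).
  rewrite (Heq (x + h)), (Heq x); [apply Hd; auto; lra | |].
  - rewrite Rminus_diag, Rabs_R0; lra.
  - replace (x + h - x) with h by ring. lra.
Qed.

Definition diff_quot (f : R -> R) (fd x y : R) : R :=
  if Req_EM_T y x then fd else (f y - f x) / (y - x).

Lemma diff_quot_continuous f fd x : derivable_pt_lim f x fd -> continuity_pt (diff_quot f fd x) x.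
Proof.
  intros H. apply continuity_pt_eps. intros e He. destruct (H e He) as [d Hd].
  exists d. split; [apply cond_pos|]. intros y Hy. unfold diff_quot.
  destruct (Req_EM_T x x) as [_|C]; [|congruence].
  destruct (Req_EM_T y x) as [E|NE].
  - rewrite Rminus_diag, Rabs_R0; lra.
  - replace y with (x + (y - x)) by ring. replace (x + (y - x) - x) with (y - x) by ring.
    apply Hd; [intro Z; apply NE; lra | exact Hy].
Qed.

Lemma limit1_in_local (f g : R -> R) (Dom : R -> Prop) l x0 r : 0 < r ->
  (forall y, Dom y -> Rabs (y - x0) < r -> g y = f y) ->
  limit1_in f Dom l x0 -> limit1_in g Dom l x0.
Proof.
  intros Hr Heq Hf e He. destruct (Hf e He) as [d [Hd Hfd]].
  exists (Rmin d r). split; [apply Rmin_pos; lra|].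
  intros y [Hy Hyd]. simpl in *. unfold R_dist in *.
  pose proof (Rmin_l d r). pose proof (Rmin_r d r).
  rewrite Heq by (auto; lra). apply Hfd. split; [auto | simpl; unfold R_dist; lra].
Qed.

Lemma continuity_pt_increment (Q : R -> R) x : continuity_pt Q x ->
  limit1_in (fun h => Q (x + h)) (fun h => h <> 0) (Q x) 0.
Proof.
  intros HQ e He. destruct (proj1 (continuity_pt_eps Q x) HQ e He) as [d [Hd Hu]].
  exists d. split; [lra|]. intros h [_ Hh]. simpl in *. unfold R_dist in *.
  apply Hu. replace (x + h - x) with (h - 0) by ring. exact Hh.
Qed.

Lemma derivable_pt_lim_implicit (x Q S : R -> R) mu l r :
  derivable_pt_lim S mu l -> continuity_pt Q mu -> Q mu <> 0 -> 0 < r ->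
  (forall m, Rabs (m - mu) < r -> (x m - x mu) * Q m = S m - S mu) ->
  derivable_pt_lim x mu (l / Q mu).
Proof.
  intros HS HQ HQ0 Hr Heq.
  assert (Hnear : exists d, 0 < d /\ forall m, Rabs (m - mu) < d -> Q m <> 0).
  { destruct (proj1 (continuity_pt_eps Q mu) HQ (Rabs (Q mu))) as [d [Hd Hu]].
    { apply Rabs_pos_lt; exact HQ0. }
    exists d. split; [exact Hd|]. intros m Hm HQm. specialize (Hu m Hm).
    rewrite HQm, Rminus_0_l, Rabs_Ropp in Hu. lra. }
  destruct Hnear as [d [Hd HQnz]].
  apply uniqueness_step3. unfold Rdiv.
  apply (limit1_in_local (fun h => (S (mu + h) - S mu) / h * / Q (mu + h)) _ _ _ _ (Rmin d r)).
  - apply Rmin_pos; lra.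
  - intros h Hh0 Hh. rewrite Rminus_0_r in Hh.
    pose proof (Rmin_l d r). pose proof (Rmin_r d r).
    assert (HQh : Q (mu + h) <> 0) by (apply HQnz; replace (mu + h - mu) with h by ring; lra).
    rewrite <- Heq by (replace (mu + h - mu) with h by ring; lra). field. auto.
  - apply limit_mul; [apply uniqueness_step2; exact HS|].
    apply limit_inv; [apply continuity_pt_increment; exact HQ | exact HQ0].
Qed.

Lemma slope_bound_abs (f : R -> R) a b m : 0 <= m ->
  (forall x y, a <= x -> x < y -> y <= b -> m * (y - x) <= f y - f x) ->
  forall x y, a <= x <= b -> a <= y <= b -> m * Rabs (x - y) <= Rabs (f x - f y).
Proof.
  intros Hm Hs x y Hx Hy. destruct (Rtotal_order x y) as [Hxy|[->|Hxy]].
  - pose proof (Hs x y ltac:(lra) Hxy ltac:(lra)).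
    rewrite (Rabs_left (x - y)), (Rabs_left1 (f x - f y)) by nra. lra.
  - rewrite !Rminus_diag, Rabs_R0. lra.
  - pose proof (Hs y x ltac:(lra) Hxy ltac:(lra)).
    rewrite (Rabs_right (x - y)), (Rabs_right (f x - f y)) by nra. lra.
Qed.

Lemma slope_bound_near (f df : R -> R) x0 :
  (forall x, derivable_pt_lim f x (df x)) -> continuity_pt df x0 -> 0 < df x0 ->
  exists s m, 0 < s /\ 0 < m /\
    forall x y, x0 - s <= x -> x < y -> y <= x0 + s -> m * (y - x) <= f y - f x.
Proof.
  intros Hd Hc Hpos. set (m := df x0 / 2).
  destruct (proj1 (continuity_pt_eps df x0) Hc m ltac:(unfold m; lra)) as [rho [Hrho Hnear]].
  exists (rho / 2), m. split; [lra|]. split; [unfold m; lra|].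
  intros x y Hx Hxy Hy. destruct (MVT_cor2 f df x y Hxy) as [c [Hfc Hc']].
  { intros c _; apply Hd. }
  rewrite Hfc. assert (Hdc : Rabs (c - x0) < rho) by (apply Rabs_lt_between; lra).
  apply Hnear, Rabs_lt_between in Hdc. unfold m in *. nra.
Qed.

(* Both lambda_P = lamP f1 g1 and lambda_Z = lamZ f2 g2 are instances. *)
Section LevelPoint.
Variables (f df : R -> R) (g L : R).
Hypotheses (Hd : forall x, derivable_pt_lim f x (df x))
  (Hdc : forall x, continuity_pt df x)
  (Hpos : forall x, 0 <= x -> 0 < df x) (Hf0 : f 0 = 0) (Hg : 0 < g)
  (HL : lim_infty f L).

Lemma increasing_strict x y : 0 <= x -> x < y -> f x < f y.
Proof.
  intros Hx Hxy. destruct (MVT_cor2 f df x y Hxy) as [c [Hfc Hc]]; [intros c _; apply Hd|].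
  assert (0 < df c) by (apply Hpos; lra). nra.
Qed.

Lemma increasing_weak x y : 0 <= x -> x <= y -> f x <= f y.
Proof. intros Hx [H|<-]; [left; apply increasing_strict | right]; auto. Qed.

Lemma increasing_continuous : continuity f.
Proof. intro x. exact (derivable_continuous_pt_lim _ _ _ (Hd x)). Qed.

(* For 0 < d/g < L the level point exists (intermediate value theorem) and is positive. *)
Lemma level_point_spec d : 0 < d -> d / g < L -> 0 < lamZ f g d /\ f (lamZ f g d) = d / g.
Proof.
  intros Hd0 HdL. assert (Hdg : 0 < d / g) by (apply Rdiv_lt_0_compat; lra).
  assert (Hex : exists x, 0 <= x /\ f x = d / g).
  { destruct (HL (L - d / g)) as [M HM]; [lra|].
    set (y := Rmax M 1). assert (Hy : 0 < y) by (unfold y; pose proof (Rmax_r M 1); lra).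
    pose proof (HM y (Rmax_l M 1)) as Hfy. apply Rabs_lt_between in Hfy.
    destruct (IVT (fun x => f x - d / g) 0 y) as [z [Hz Hfz]]; try lra.
    - intro x. apply continuity_pt_minus; [apply increasing_continuous|].
      apply continuity_pt_const. intros a b; reflexivity.
    - exists z. split; lra. }
  destruct (epsilon_spec (inhabits 0) (fun x => 0 <= x /\ f x = d / g) Hex) as [H1 H2].
  split; [|exact H2]. destruct H1 as [H1|H1]; [exact H1|].
  rewrite <- H1, Hf0 in H2. lra.
Qed.

Lemma preimage_localized x0 s m y : 0 < s -> s <= x0 -> 0 <= m ->
  (forall x z, x0 - s <= x -> x < z -> z <= x0 + s -> m * (z - x) <= f z - f x) ->
  0 <= y -> Rabs (f y - f x0) <= m * s / 2 -> x0 - s <= y <= x0 + s.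
Proof.
  intros Hs Hsx Hm Hslope Hy Hfy. apply Rabs_le_between in Hfy.
  pose proof (Hslope x0 (x0 + s) ltac:(lra) ltac:(lra) ltac:(lra)) as Hup.
  pose proof (Hslope (x0 - s) x0 ltac:(lra) ltac:(lra) ltac:(lra)) as Hlo.
  split.
  - destruct (Rlt_le_dec y (x0 - s)) as [H|H]; [|exact H].
    pose proof (increasing_strict y (x0 - s) Hy H). nra.
  - destruct (Rle_lt_dec y (x0 + s)) as [H|H]; [exact H|].
    pose proof (increasing_strict (x0 + s) y ltac:(lra) H). nra.
Qed.

Lemma level_point_lipschitz d0 r0 : 0 < d0 -> 0 < r0 ->
  (forall d, Rabs (d - d0) < r0 -> d / g < L) ->
  exists r K, 0 < r /\ 0 <= K /\ forall d d', Rabs (d - d0) <= r -> Rabs (d' - d0) <= r ->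
    0 < lamZ f g d /\ f (lamZ f g d) = d / g /\
    Rabs (lamZ f g d - lamZ f g d') <= K * Rabs (d - d').
Proof.
  intros Hd0 Hr0 Hadm.
  assert (HL0 : d0 / g < L) by (apply Hadm; rewrite Rminus_diag, Rabs_R0; lra).
  destruct (level_point_spec d0 Hd0 HL0) as [Hx0 Hfx0]. set (x0 := lamZ f g d0) in *.
  destruct (slope_bound_near f df x0 Hd (Hdc x0) (Hpos x0 ltac:(lra))) as [s0 [m [Hs0 [Hm Hslope]]]].
  set (s := Rmin s0 (x0 / 2)).
  assert (Hs : 0 < s) by (apply Rmin_pos; lra).
  pose proof (Rmin_l s0 (x0 / 2)) as Hs1. pose proof (Rmin_r s0 (x0 / 2)) as Hs2. fold s in Hs1, Hs2.
  assert (Hslope' : forall x y, x0 - s <= x -> x < y -> y <= x0 + s -> m * (y - x) <= f y - f x)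
    by (intros; apply Hslope; lra).
  set (r := Rmin (Rmin (r0 / 2) (d0 / 2)) (g * m * s / 2)).
  assert (Hr : 0 < r) by (unfold r; repeat apply Rmin_pos; try lra;
    apply Rdiv_lt_0_compat; [apply Rmult_lt_0_compat; [apply Rmult_lt_0_compat|]|]; lra).
  assert (Hr1 : r <= r0 / 2) by (unfold r; eapply Rle_trans; [apply Rmin_l | apply Rmin_l]).
  assert (Hr2 : r <= d0 / 2) by (unfold r; eapply Rle_trans; [apply Rmin_l | apply Rmin_r]).
  assert (Hr3 : r <= g * m * s / 2) by (unfold r; apply Rmin_r).
  assert (Hloc : forall d, Rabs (d - d0) <= r ->
     0 < lamZ f g d /\ f (lamZ f g d) = d / g /\ x0 - s <= lamZ f g d <= x0 + s).
  { intros d Hdd. pose proof (proj1 (Rabs_le_between _ _) Hdd) as Hdd'.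
    destruct (level_point_spec d ltac:(lra) (Hadm d ltac:(apply Rabs_lt_between; lra))) as [Hl1 Hl2].
    do 2 (split; [assumption|]). apply (preimage_localized x0 s m); try lra; [exact Hslope'|].
    rewrite Hl2, Hfx0. replace (d / g - d0 / g) with ((d - d0) / g) by (field; lra).
    rewrite Rabs_div, (Rabs_right g) by lra.
    apply Rmult_le_reg_r with g; [lra|]. unfold Rdiv. rewrite Rmult_assoc, Rinv_l, Rmult_1_r by lra.
    nra. }
  exists r, (/ (g * m)). split; [exact Hr|]. split; [left; apply Rinv_0_lt_compat; nra|].
  intros d d' Hd1 Hd2. destruct (Hloc d Hd1) as [A1 [A2 A3]]. destruct (Hloc d' Hd2) as [B1 [B2 B3]].
  split; [exact A1|]. split; [exact A2|].
  pose proof (slope_bound_abs f (x0 - s) (x0 + s) m ltac:(lra) Hslope' _ _ A3 B3) as Hinv.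
  rewrite A2, B2 in Hinv.
  replace (d / g - d' / g) with ((d - d') * / g) in Hinv by (field; lra).
  rewrite Rabs_mult, Rabs_inv, (Rabs_right g) in Hinv by lra.
  apply Rmult_le_reg_l with m; [lra|].
  replace (m * (/ (g * m) * Rabs (d - d'))) with (Rabs (d - d') * / g) by (field; lra). lra.
Qed.

End LevelPoint.

Definition dist3 m d1 d2 m' d1' d2' : R :=
  Rabs (m - m') + Rabs (d1 - d1') + Rabs (d2 - d2').

Lemma dist3_nonneg m d1 d2 m' d1' d2' : 0 <= dist3 m d1 d2 m' d1' d2'.
Proof.
  unfold dist3. pose proof (Rabs_pos (m - m')). pose proof (Rabs_pos (d1 - d1')).
  pose proof (Rabs_pos (d2 - d2')). lra.
Qed.

(* These are
   closed under the arithmetic operations and under composition with locally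
   Lipschitz functions, which is how all regularity estimates of the
   coefficients below are obtained. *)
Section LipBox.
Variables (mc Dc : R).

Definition in_box t m d1 d2 : Prop :=
  Rabs (m - mc) <= t /\ Rabs (d1 - Dc) <= t /\ Rabs (d2 - Dc) <= t.

Definition lip_box t (u : R -> R -> R -> R) : Prop := exists B C, 0 <= C /\
  forall m d1 d2 m' d1' d2', in_box t m d1 d2 -> in_box t m' d1' d2' ->
    Rabs (u m d1 d2) <= B /\ Rabs (u m d1 d2 - u m' d1' d2') <= C * dist3 m d1 d2 m' d1' d2'.

Lemma lip_box_const t c : lip_box t (fun _ _ _ => c).
Proof.
  exists (Rabs c), 0. split; [lra|]. intros. rewrite Rminus_diag, Rabs_R0.
  pose proof (dist3_nonneg m d1 d2 m' d1' d2'). split; lra.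
Qed.

Lemma lip_box_m t : lip_box t (fun m _ _ => m).
Proof.
  exists (Rabs mc + t), 1. split; [lra|]. intros m d1 d2 m' d1' d2' [H _] _. unfold dist3.
  pose proof (Rabs_triang_inv m mc). pose proof (Rabs_pos (d1 - d1')).
  pose proof (Rabs_pos (d2 - d2')). split; lra.
Qed.

Lemma lip_box_d1 t : lip_box t (fun _ d1 _ => d1).
Proof.
  exists (Rabs Dc + t), 1. split; [lra|]. intros m d1 d2 m' d1' d2' [_ [H _]] _. unfold dist3.
  pose proof (Rabs_triang_inv d1 Dc). pose proof (Rabs_pos (m - m')).
  pose proof (Rabs_pos (d2 - d2')). split; lra.
Qed.

Lemma lip_box_d2 t : lip_box t (fun _ _ d2 => d2).
Proof.
  exists (Rabs Dc + t), 1. split; [lra|]. intros m d1 d2 m' d1' d2' [_ [_ H]] _. unfold dist3.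
  pose proof (Rabs_triang_inv d2 Dc). pose proof (Rabs_pos (m - m')).
  pose proof (Rabs_pos (d1 - d1')). split; lra.
Qed.

Lemma lip_box_plus t u w : lip_box t u -> lip_box t w ->
  lip_box t (fun m d1 d2 => u m d1 d2 + w m d1 d2).
Proof.
  intros [B1 [C1 [HC1 H1]]] [B2 [C2 [HC2 H2]]]. exists (B1 + B2), (C1 + C2). split; [lra|].
  intros m d1 d2 m' d1' d2' Hs Hs'.
  destruct (H1 _ _ _ _ _ _ Hs Hs') as [A1 A2]. destruct (H2 _ _ _ _ _ _ Hs Hs') as [E1 E2].
  split; [eapply Rle_trans; [apply Rabs_triang | lra]|].
  replace (u m d1 d2 + w m d1 d2 - (u m' d1' d2' + w m' d1' d2'))
    with ((u m d1 d2 - u m' d1' d2') + (w m d1 d2 - w m' d1' d2')) by ring.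
  eapply Rle_trans; [apply Rabs_triang | lra].
Qed.

Lemma lip_box_opp t u : lip_box t u -> lip_box t (fun m d1 d2 => - u m d1 d2).
Proof.
  intros [B [C [HC H]]]. exists B, C. split; [exact HC|].
  intros m d1 d2 m' d1' d2' Hs Hs'. rewrite Rabs_Ropp.
  replace (- u m d1 d2 - - u m' d1' d2') with (- (u m d1 d2 - u m' d1' d2')) by ring.
  rewrite Rabs_Ropp. auto.
Qed.

Lemma lip_box_minus t u w : lip_box t u -> lip_box t w ->
  lip_box t (fun m d1 d2 => u m d1 d2 - w m d1 d2).
Proof. intros Hu Hw. apply (lip_box_plus t u (fun m d1 d2 => - w m d1 d2) Hu), lip_box_opp, Hw. Qed.

Lemma lip_box_mult t u w : lip_box t u -> lip_box t w ->
  lip_box t (fun m d1 d2 => u m d1 d2 * w m d1 d2).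
Proof.
  intros [B1 [C1 [HC1 H1]]] [B2 [C2 [HC2 H2]]].
  exists (Rabs B1 * Rabs B2), (Rabs B1 * C2 + Rabs B2 * C1).
  split; [pose proof (Rabs_pos B1); pose proof (Rabs_pos B2); nra|].
  intros m d1 d2 m' d1' d2' Hs Hs'.
  destruct (H1 _ _ _ _ _ _ Hs Hs') as [A1 A2]. destruct (H2 _ _ _ _ _ _ Hs Hs') as [E1 E2].
  destruct (H2 _ _ _ _ _ _ Hs' Hs) as [E1' _].
  pose proof (Rle_abs B1). pose proof (Rle_abs B2). pose proof (dist3_nonneg m d1 d2 m' d1' d2').
  pose proof (Rabs_pos (u m d1 d2)). pose proof (Rabs_pos (w m d1 d2)).
  pose proof (Rabs_pos (w m' d1' d2')).
  pose proof (Rabs_pos (w m d1 d2 - w m' d1' d2')). pose proof (Rabs_pos (u m d1 d2 - u m' d1' d2')).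
  split; [rewrite Rabs_mult; apply Rmult_le_compat; lra|].
  replace (u m d1 d2 * w m d1 d2 - u m' d1' d2' * w m' d1' d2') with
    (u m d1 d2 * (w m d1 d2 - w m' d1' d2') + w m' d1' d2' * (u m d1 d2 - u m' d1' d2')) by ring.
  eapply Rle_trans; [apply Rabs_triang|]. rewrite !Rabs_mult.
  assert (Rabs (u m d1 d2) * Rabs (w m d1 d2 - w m' d1' d2')
          <= Rabs B1 * (C2 * dist3 m d1 d2 m' d1' d2')) by (apply Rmult_le_compat; lra).
  assert (Rabs (w m' d1' d2') * Rabs (u m d1 d2 - u m' d1' d2')
          <= Rabs B2 * (C1 * dist3 m d1 d2 m' d1' d2')) by (apply Rmult_le_compat; lra).
  nra.
Qed.

Lemma lip_box_pow2 t u : lip_box t u -> lip_box t (fun m d1 d2 => u m d1 d2 ^ 2).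
Proof.
  intros Hu. destruct (lip_box_mult t u u Hu Hu) as [B [C [HC H]]].
  exists B, C. split; [exact HC|]. intros. simpl. rewrite !Rmult_1_r. auto.
Qed.

Lemma lip_box_inv t w c : lip_box t w -> 0 < c ->
  (forall m d1 d2, in_box t m d1 d2 -> c <= Rabs (w m d1 d2)) ->
  lip_box t (fun m d1 d2 => / w m d1 d2).
Proof.
  intros [B [C [HC H]]] Hc Hlow. exists (/ c), (C / (c * c)).
  split; [apply Rmult_le_pos; [exact HC | left; apply Rinv_0_lt_compat; nra]|].
  intros m d1 d2 m' d1' d2' Hs Hs'. destruct (H _ _ _ _ _ _ Hs Hs') as [_ A2].
  pose proof (Hlow _ _ _ Hs) as L1. pose proof (Hlow _ _ _ Hs') as L2.
  assert (w m d1 d2 <> 0) by (intro Z; rewrite Z, Rabs_R0 in L1; lra).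
  assert (w m' d1' d2' <> 0) by (intro Z; rewrite Z, Rabs_R0 in L2; lra).
  split; [rewrite Rabs_inv; apply Rinv_le_contravar; lra|].
  replace (/ w m d1 d2 - / w m' d1' d2')
    with (- (w m d1 d2 - w m' d1' d2') * / (w m d1 d2 * w m' d1' d2')) by (field; auto).
  rewrite Rabs_mult, Rabs_Ropp, Rabs_inv, Rabs_mult.
  apply Rle_trans with ((C * dist3 m d1 d2 m' d1' d2') * / (c * c)); [|right; unfold Rdiv; ring].
  apply Rmult_le_compat; [apply Rabs_pos | left; apply Rinv_0_lt_compat; nra | exact A2|].
  apply Rinv_le_contravar; [nra | apply Rmult_le_compat; lra].
Qed.

Lemma lip_box_div t u w c : lip_box t u -> lip_box t w -> 0 < c ->
  (forall m d1 d2, in_box t m d1 d2 -> c <= Rabs (w m d1 d2)) ->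
  lip_box t (fun m d1 d2 => u m d1 d2 / w m d1 d2).
Proof.
  intros Hu Hw Hc Hlow. apply (lip_box_mult t u (fun m d1 d2 => / w m d1 d2) Hu).
  exact (lip_box_inv t w c Hw Hc Hlow).
Qed.

Lemma lip_box_divc t u c : lip_box t u -> c <> 0 -> lip_box t (fun m d1 d2 => u m d1 d2 / c).
Proof.
  intros Hu Hc. apply (lip_box_div t u (fun _ _ _ => c) (Rabs c) Hu (lip_box_const t c)).
  - apply Rabs_pos_lt, Hc.
  - intros; lra.
Qed.

Lemma lip_box_comp t f u : loc_lipschitz f -> lip_box t u -> lip_box t (fun m d1 d2 => f (u m d1 d2)).
Proof.
  intros Hf [B [C [HC H]]]. destruct (Hf B) as [K [HK HKf]].
  exists (Rabs (f 0) + K * B), (K * C). split; [nra|].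
  intros m d1 d2 m' d1' d2' Hs Hs'.
  destruct (H _ _ _ _ _ _ Hs Hs') as [A1 A2]. destruct (H _ _ _ _ _ _ Hs' Hs) as [A1' _].
  split.
  - assert (Hf0 : Rabs (f (u m d1 d2) - f 0) <= K * Rabs (u m d1 d2 - 0))
      by (apply HKf; rewrite ?Rabs_R0; pose proof (Rabs_pos (u m d1 d2)); lra).
    rewrite Rminus_0_r in Hf0. pose proof (Rabs_triang_inv (f (u m d1 d2)) (f 0)).
    assert (K * Rabs (u m d1 d2) <= K * B) by (apply Rmult_le_compat_l; lra). lra.
  - eapply Rle_trans; [apply HKf; auto|]. rewrite Rmult_assoc. apply Rmult_le_compat_l; auto.
Qed.

Lemma in_box_shift t m y d1 d2 : Rabs (y - m) < t - Rabs (m - mc) ->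
  Rabs (d1 - Dc) <= t -> Rabs (d2 - Dc) <= t -> in_box t y d1 d2.
Proof.
  intros Hy H1 H2. split; [|split; assumption].
  pose proof (Rabs_triang (y - m) (m - mc)) as Htri.
  replace (y - m + (m - mc)) with (y - mc) in Htri by ring. lra.
Qed.

Lemma lip_box_continuous_m t u m d1 d2 : lip_box t u ->
  Rabs (m - mc) < t -> Rabs (d1 - Dc) <= t -> Rabs (d2 - Dc) <= t ->
  continuity_pt (fun x => u x d1 d2) m.
Proof.
  intros [B [C [HC H]]] Hm H1 H2.
  apply (continuity_pt_lipschitz _ m (t - Rabs (m - mc)) C); [lra|].
  intros y Hy. assert (Hin : in_box t y d1 d2) by (apply (in_box_shift t m); assumption).
  destruct (H _ _ _ _ _ _ Hin (conj (Rlt_le _ _ Hm) (conj H1 H2))) as [_ Hlip].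
  unfold dist3 in Hlip. rewrite !Rminus_diag, !Rabs_R0, !Rplus_0_r in Hlip. exact Hlip.
Qed.

Lemma in_box_mono t t' m d1 d2 : t' <= t -> in_box t' m d1 d2 -> in_box t m d1 d2.
Proof. unfold in_box. lra. Qed.

Lemma lip_box_near_center t u e : 0 < t -> lip_box t u -> 0 < e ->
  exists t', (0 < t' <= t) /\
    forall m d1 d2, in_box t' m d1 d2 -> Rabs (u m d1 d2 - u mc Dc Dc) < e.
Proof.
  intros Ht [B [C [HC H]]] He. set (t' := Rmin t (e / (3 * C + 1))).
  assert (Ht'1 : t' <= t) by apply Rmin_l.
  assert (Ht'2 : t' <= e / (3 * C + 1)) by apply Rmin_r.
  assert (Ht'p : 0 < t') by (apply Rmin_pos; [lra | apply Rdiv_lt_0_compat; lra]).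
  exists t'. split; [split; lra|]. intros m d1 d2 Hb.
  assert (Hc : in_box t mc Dc Dc) by (unfold in_box; rewrite !Rminus_diag, Rabs_R0; repeat split; lra).
  destruct (H _ _ _ _ _ _ (in_box_mono t t' _ _ _ Ht'1 Hb) Hc) as [_ Hlip].
  assert (Hd : dist3 m d1 d2 mc Dc Dc <= 3 * t') by (unfold in_box, dist3 in *; lra).
  assert (Hct : (3 * C + 1) * t' <= e).
  { apply Rle_trans with ((3 * C + 1) * (e / (3 * C + 1))); [apply Rmult_le_compat_l; lra|].
    right; field; lra. }
  nra.
Qed.

End LipBox.

Lemma loc_lipschitz_Rabs : loc_lipschitz Rabs.
Proof. intro B. exists 1. split; [lra|]. intros x y _ _. rewrite Rmult_1_l. apply Rabs_triang_inv2. Qed.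

Create HintDb lip_box.
#[export] Hint Resolve lip_box_const lip_box_m lip_box_d1 lip_box_d2 loc_lipschitz_Rabs : lip_box.

(* Decomposes a lip_box goal along the arithmetic structure of the function;
   the leaves are closed by the lip_box hint database (constants, the three
   variables, and model-specific atoms registered later), and compositions
   f (u m d1 d2) use a loc_lipschitz fact for f from the same database. *)
Ltac lip_box_solve :=
  repeat match goal with
  | |- lip_box _ _ _ (fun m d1 d2 => @?a m d1 d2 + @?b m d1 d2) => apply (lip_box_plus _ _ _ a b)
  | |- lip_box _ _ _ (fun m d1 d2 => @?a m d1 d2 - @?b m d1 d2) => apply (lip_box_minus _ _ _ a b)
  | |- lip_box _ _ _ (fun m d1 d2 => @?a m d1 d2 * @?b m d1 d2) => apply (lip_box_mult _ _ _ a b)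
  | |- lip_box _ _ _ (fun m d1 d2 => - @?a m d1 d2) => apply (lip_box_opp _ _ _ a)
  | |- lip_box _ _ _ (fun m d1 d2 => @?a m d1 d2 ^ 2) => apply (lip_box_pow2 _ _ _ a)
  | |- lip_box _ _ _ _ => solve [eauto with lip_box]
  | |- lip_box _ _ _ (fun m d1 d2 => @?a m d1 d2 / ?c) => apply (lip_box_divc _ _ _ a c)
  | |- lip_box _ _ _ (fun m d1 d2 => ?f (@?a m d1 d2)) =>
      apply (lip_box_comp _ _ _ f a); [solve [eauto with lip_box] |]
  end.

(* The monic cubic det(J - x I) = p0 + p1 x + p2 x^2 - x^3, and the
   difference quotient of it, which controls its roots. *)
Definition cubic (p0 p1 p2 x : R) : R := p0 + p1 * x + p2 * (x * x) - x * (x * x).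

Definition cubic_slope (p1 p2 x y : R) : R := p1 + p2 * (x + y) - (x * x + x * y + y * y).

Lemma cubic_diff p0 p1 p2 x y :
  cubic p0 p1 p2 x - cubic p0 p1 p2 y = (x - y) * cubic_slope p1 p2 x y.
Proof. unfold cubic, cubic_slope. ring. Qed.

Lemma cubic_coeff_diff p0 p1 p2 p0' p1' p2' x :
  Rabs (cubic p0 p1 p2 x - cubic p0' p1' p2' x)
  <= Rabs (p0 - p0') + Rabs (p1 - p1') * Rabs x + Rabs (p2 - p2') * (Rabs x * Rabs x).
Proof.
  replace (cubic p0 p1 p2 x - cubic p0' p1' p2' x)
    with ((p0 - p0') + (p1 - p1') * x + (p2 - p2') * (x * x)) by (unfold cubic; ring).
  eapply Rle_trans; [apply Rabs_triang|]. rewrite !Rabs_mult.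
  apply Rplus_le_compat_r. eapply Rle_trans; [apply Rabs_triang|]. rewrite Rabs_mult. lra.
Qed.

(* The third component gamma of the factorization of the cubic as
   (alpha - x)(beta - gamma x + x^2) with alpha < 0 and gamma^2 - 4 beta < 0;
   gammaF is this function applied to the characteristic coefficients. *)
Definition factor_gamma (c : R * R * R) : R :=
  epsilon (inhabits 0) (fun g => exists a b, a < 0 /\ g ^ 2 - 4 * b < 0 /\ Mmap a b g = c).

Lemma factor_gamma_root p0 p1 p2 a0 : cubic p0 p1 p2 a0 = 0 -> a0 < 0 ->
  (p2 - a0) ^ 2 - 4 * (- p1 - a0 * (p2 - a0)) < 0 ->
  (exists a b g, a < 0 /\ g ^ 2 - 4 * b < 0 /\ Mmap a b g = (p0, p1, p2)) /\
  factor_gamma (p0, p1, p2) = p2 - a0.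
Proof.
  intros Hq Ha Hdisc. unfold cubic in Hq.
  assert (Hex : exists a b g, a < 0 /\ g ^ 2 - 4 * b < 0 /\ Mmap a b g = (p0, p1, p2)).
  { exists a0, (- p1 - a0 * (p2 - a0)), (p2 - a0). do 2 (split; [assumption|]).
    unfold Mmap. f_equal; [f_equal|]; nra. }
  split; [exact Hex|].
  destruct (epsilon_spec (inhabits 0)
     (fun g => exists a b, a < 0 /\ g ^ 2 - 4 * b < 0 /\ Mmap a b g = (p0, p1, p2)))
    as [a' [b' [Ha' [Hd' HM]]]].
  { destruct Hex as [a [b [g H]]]. exists g, a, b. exact H. }
  fold (factor_gamma (p0, p1, p2)) in Hd', HM. set (g' := factor_gamma (p0, p1, p2)) in *.
  unfold Mmap in HM. injection HM as E0 E1 E2.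
  (* a0 is a root of (a' - x)(b' - g' x + x^2), whose second factor is positive *)
  assert (Hfac : 0 = (a' - a0) * (b' - g' * a0 + a0 ^ 2))
    by (rewrite <- Hq, <- E0, <- E1, <- E2; ring).
  assert (Hpos : 0 < b' - g' * a0 + a0 ^ 2) by (pose proof (pow2_ge_0 (2 * a0 - g')); nra).
  assert (a' = a0) by nra. lra.
Qed.

(* Roots of the cubic near a point c: on [c - r, c + r] the difference
   quotient is at most -ms, and |cubic(c)| < ms r forces a root there. *)
Definition root_isolated (c r ms p0 p1 p2 : R) : Prop :=
  0 < r /\ 0 < ms /\
  (forall x y, Rabs (x - c) <= r -> Rabs (y - c) <= r -> cubic_slope p1 p2 x y <= - ms) /\
  Rabs (cubic p0 p1 p2 c) < ms * r.

Definition root_near (c r p0 p1 p2 : R) : R :=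
  epsilon (inhabits 0) (fun x => Rabs (x - c) <= r /\ cubic p0 p1 p2 x = 0).

Lemma root_near_spec c r ms p0 p1 p2 : root_isolated c r ms p0 p1 p2 ->
  Rabs (root_near c r p0 p1 p2 - c) <= r /\ cubic p0 p1 p2 (root_near c r p0 p1 p2) = 0.
Proof.
  intros [Hr [Hms [Hslope Hc]]].
  apply (epsilon_spec (inhabits 0) (fun x => Rabs (x - c) <= r /\ cubic p0 p1 p2 x = 0)).
  apply Rabs_lt_between in Hc.
  assert (Hl : Rabs (c - r - c) <= r) by (apply Rabs_le_between; lra).
  assert (Hu : Rabs (c + r - c) <= r) by (apply Rabs_le_between; lra).
  assert (H0 : Rabs (c - c) <= r) by (rewrite Rminus_diag, Rabs_R0; lra).
  pose proof (Hslope _ _ Hl H0) as Sl. pose proof (Hslope _ _ Hu H0) as Su.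
  pose proof (cubic_diff p0 p1 p2 (c - r) c) as El. pose proof (cubic_diff p0 p1 p2 (c + r) c) as Eu.
  replace (c - r - c) with (- r) in El by ring. replace (c + r - c) with r in Eu by ring.
  destruct (IVT (fun x => - cubic p0 p1 p2 x) (c - r) (c + r)) as [z [Hz Hqz]]; try nra.
  - intro x. unfold cubic. reg.
  - exists z. split; [apply Rabs_le_between; lra | lra].
Qed.

Lemma root_near_unique c r ms p0 p1 p2 x : root_isolated c r ms p0 p1 p2 ->
  Rabs (x - c) <= r -> cubic p0 p1 p2 x = 0 -> x = root_near c r p0 p1 p2.
Proof.
  intros Hiso Hx Hqx. destruct (root_near_spec c r ms p0 p1 p2 Hiso) as [Ha Hqa].
  destruct Hiso as [_ [Hms [Hslope _]]].
  pose proof (cubic_diff p0 p1 p2 x (root_near c r p0 p1 p2)) as E. rewrite Hqx, Hqa in E.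
  pose proof (Hslope _ _ Hx Ha). nra.
Qed.

Lemma root_near_perturb c r ms p0 p1 p2 p0' p1' p2' :
  root_isolated c r ms p0 p1 p2 -> root_isolated c r ms p0' p1' p2' ->
  ms * Rabs (root_near c r p0 p1 p2 - root_near c r p0' p1' p2')
  <= Rabs (cubic p0 p1 p2 (root_near c r p0' p1' p2') - cubic p0' p1' p2' (root_near c r p0' p1' p2')).
Proof.
  intros Hiso Hiso'.
  destruct (root_near_spec c r ms p0 p1 p2 Hiso) as [Ha Hqa].
  destruct (root_near_spec c r ms p0' p1' p2' Hiso') as [Ha' Hqa'].
  set (a := root_near c r p0 p1 p2) in *. set (a' := root_near c r p0' p1' p2') in *.
  destruct Hiso as [_ [Hms [Hslope _]]]. pose proof (Hslope _ _ Ha Ha') as Sb.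
  pose proof (cubic_diff p0 p1 p2 a a') as E. rewrite Hqa in E. rewrite Hqa', Rminus_0_r.
  replace (cubic p0 p1 p2 a') with (- ((a - a') * cubic_slope p1 p2 a a')) by lra.
  rewrite Rabs_Ropp, Rabs_mult, (Rabs_left1 (cubic_slope p1 p2 a a')) by lra.
  pose proof (Rabs_pos (a - a')). nra.
Qed.

Lemma continuity_pt_cubic_slope (p1 p2 a : R -> R) c x :
  continuity_pt p1 x -> continuity_pt p2 x -> continuity_pt a x ->
  continuity_pt (fun m => cubic_slope (p1 m) (p2 m) (a m) c) x.
Proof.
  intros H1 H2 Ha.
  assert (Hc : continuity_pt (fct_cte c) x) by (apply continuity_pt_const; intros u v; reflexivity).
  change (fun m => cubic_slope (p1 m) (p2 m) (a m) c)
    with (p1 + p2 * (a + fct_cte c) - (a * a + a * fct_cte c + fct_cte c * fct_cte c))%F.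
  repeat first [ apply continuity_pt_plus | apply continuity_pt_minus | apply continuity_pt_mult
               | apply continuity_pt_opp | assumption ].
Qed.

Lemma cubic_root_derivative (p0 p1 p2 a : R -> R) mu r dp0 dp1 dp2 : 0 < r ->
  (forall m, Rabs (m - mu) < r -> cubic (p0 m) (p1 m) (p2 m) (a m) = 0) ->
  derivable_pt_lim p0 mu dp0 -> derivable_pt_lim p1 mu dp1 -> derivable_pt_lim p2 mu dp2 ->
  continuity_pt p1 mu -> continuity_pt p2 mu -> continuity_pt a mu ->
  cubic_slope (p1 mu) (p2 mu) (a mu) (a mu) <> 0 ->
  derivable_pt_lim a mu
    (- (dp0 + dp1 * a mu + dp2 * (a mu * a mu)) / cubic_slope (p1 mu) (p2 mu) (a mu) (a mu)).
Proof.
  intros Hr Hroot H0 H1 H2 C1 C2 Ca Hs. set (a0 := a mu).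
  apply (derivable_pt_lim_implicit a (fun m => cubic_slope (p1 m) (p2 m) (a m) a0)
           (fun m => - (p0 m + p1 m * a0 + p2 m * (a0 * a0))) mu _ r); try assumption.
  - apply is_derive_Reals in H0, H1, H2. apply is_derive_Reals. auto_derive.
    + repeat split; [exists dp0 | exists dp1 | exists dp2]; assumption.
    + replace (Derive (fun x : R => p0 x) mu) with dp0 by (symmetry; apply is_derive_unique, H0).
      replace (Derive (fun x : R => p1 x) mu) with dp1 by (symmetry; apply is_derive_unique, H1).
      replace (Derive (fun x : R => p2 x) mu) with dp2 by (symmetry; apply is_derive_unique, H2).
      ring.
  - apply continuity_pt_cubic_slope; assumption.
  - intros m Hm. fold a0. rewrite <- (cubic_diff (p0 m)), (Hroot m Hm).
    pose proof (Hroot mu ltac:(rewrite Rminus_diag, Rabs_R0; lra)) as Hmu.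
    fold a0 in Hmu. unfold cubic in *. lra.
Qed.

(* The level-point facts for lambda_P and
   lambda_Z and a bound on f1 are taken as hypotheses of the section; the
   main theorem derives them from the assumptions on f1 and f2. *)
Section FoodChain.
Variables (D g1 g2 : R) (f1 df1 d2f1 d3f1 f2 df2 d2f2 : R -> R) (mu_c2 : R).
Hypotheses (HD : 0 < D) (Hg1 : 0 < g1) (Hg2 : 0 < g2)
  (Hdf1 : forall x, derivable_pt_lim f1 x (df1 x))
  (Hd2f1 : forall x, derivable_pt_lim df1 x (d2f1 x))
  (Hd3f1 : forall x, derivable_pt_lim d2f1 x (d3f1 x))
  (Hc3f1 : continuity d3f1)
  (Hdf2 : forall x, derivable_pt_lim f2 x (df2 x))
  (Hd2f2 : forall x, derivable_pt_lim df2 x (d2f2 x))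
  (Hc2f2 : continuity d2f2)
  (Hf10 : f1 0 = 0)
  (Hdf1p : forall x, 0 <= x -> 0 < df1 x)
  (Hdf2p : forall x, 0 <= x -> 0 < df2 x)
  (Hmuc2 : mu_c1 f1 f2 D g1 g2 D D < mu_c2)
  (HA0 : Afun f1 f2 df1 df2 D g1 g2 mu_c2 = 0).
Variables (rP KP rL KL B1 : R).
Hypotheses (HrP : 0 < rP) (HKP : 0 <= KP) (HrL : 0 < rL) (HKL : 0 <= KL)
  (HPlip : forall d d', Rabs (d - D) <= rP -> Rabs (d' - D) <= rP ->
     0 < lamZ f2 g2 d /\ f2 (lamZ f2 g2 d) = d / g2 /\
     Rabs (lamZ f2 g2 d - lamZ f2 g2 d') <= KP * Rabs (d - d'))
  (HLlip : forall d d', Rabs (d - D) <= rL -> Rabs (d' - D) <= rL ->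
     0 < lamP f1 g1 d /\ f1 (lamP f1 g1 d) = d / g1 /\
     Rabs (lamP f1 g1 d - lamP f1 g1 d') <= KL * Rabs (d - d'))
  (HB1 : forall x, 0 <= x -> f1 x <= B1).

Notation PZ d2 := (lamZ f2 g2 d2).
Notation NE m d2 := (Nfun f1 f2 D g2 m d2).

Lemma lip_f1 : loc_lipschitz f1. Proof. exact (C2_loc_lipschitz _ _ _ Hdf1 Hd2f1). Qed.
Lemma lip_df1 : loc_lipschitz df1. Proof. exact (C2_loc_lipschitz _ _ _ Hd2f1 Hd3f1). Qed.
Lemma lip_d2f1 : loc_lipschitz d2f1. Proof. exact (C1_loc_lipschitz _ _ Hd3f1 Hc3f1). Qed.
Lemma lip_f2 : loc_lipschitz f2. Proof. exact (C2_loc_lipschitz _ _ _ Hdf2 Hd2f2). Qed.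
Lemma lip_df2 : loc_lipschitz df2. Proof. exact (C1_loc_lipschitz _ _ Hd2f2 Hc2f2). Qed.
#[local] Hint Resolve lip_f1 lip_df1 lip_d2f1 lip_f2 lip_df2 : lip_box.

Lemma N_equilibrium m d2 : 0 < m -> 0 < PZ d2 ->
  0 < NE m d2 < m /\ (m - NE m d2) * D - PZ d2 * f1 (NE m d2) = 0.
Proof.
  intros Hm HP. apply (epsilon_spec (inhabits 0)
    (fun N => 0 < N < m /\ (m - N) * D - PZ d2 * f1 N = 0)).
  pose proof (increasing_strict f1 df1 Hdf1 Hdf1p 0 m ltac:(lra) Hm) as Hf1m.
  rewrite Hf10 in Hf1m.
  destruct (IVT (fun x => PZ d2 * f1 x - (m - x) * D) 0 m) as [z [Hz Hfz]].
  - pose proof (increasing_continuous f1 df1 Hdf1) as Cf1. intro x. reg.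
  - exact Hm.
  - rewrite Hf10. nra.
  - nra.
  - exists z. assert (z <> 0) by (intros ->; rewrite Hf10 in Hfz; nra).
    assert (z <> m) by (intros ->; nra). split; lra.
Qed.

(* One-sided form of the Lipschitz estimate for N, from
   D (N - N') = D (m - m') - P (f1 N - f1 N') - (P - P') f1 N'. *)
Lemma N_lipschitz_oneside m d2 m' d2' : 0 < m -> 0 < PZ d2 -> 0 < m' -> 0 < PZ d2' ->
  NE m' d2' <= NE m d2 ->
  D * (NE m d2 - NE m' d2') <= D * Rabs (m - m') + B1 * Rabs (PZ d2 - PZ d2').
Proof.
  intros Hm HP Hm' HP' Hle.
  destruct (N_equilibrium m d2 Hm HP) as [[N1 _] E]. destruct (N_equilibrium m' d2' Hm' HP') as [[N1' _] E'].
  set (N := NE m d2) in *. set (N' := NE m' d2') in *. set (P := PZ d2) in *. set (P' := PZ d2') in *.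
  pose proof (HB1 N' ltac:(lra)) as Hbound.
  pose proof (increasing_weak f1 df1 Hdf1 Hdf1p 0 N' ltac:(lra) ltac:(lra)) as Hf1N'.
  pose proof (increasing_weak f1 df1 Hdf1 Hdf1p N' N ltac:(lra) Hle) as Hmono.
  rewrite Hf10 in Hf1N'.
  pose proof (Rle_abs (m - m')) as Hm_abs.
  assert (HP_abs : - (P - P') <= Rabs (P - P'))
    by (rewrite Rabs_minus_sym; replace (- (P - P')) with (P' - P) by ring; apply Rle_abs).
  assert (P * (f1 N - f1 N') >= 0) by nra.
  assert (- (P - P') * f1 N' <= B1 * Rabs (P - P')).
  { apply Rle_trans with (Rabs (P - P') * f1 N'); [apply Rmult_le_compat_r; lra|].
    rewrite (Rmult_comm B1). apply Rmult_le_compat_l; [apply Rabs_pos | exact Hbound]. }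
  nra.
Qed.

Lemma N_lipschitz m d2 m' d2' : 0 < m -> 0 < PZ d2 -> 0 < m' -> 0 < PZ d2' ->
  D * Rabs (NE m d2 - NE m' d2') <= D * Rabs (m - m') + B1 * Rabs (PZ d2 - PZ d2').
Proof.
  intros Hm HP Hm' HP'. destruct (Rle_dec (NE m' d2') (NE m d2)) as [Hle|Hlt].
  - rewrite Rabs_right by lra. exact (N_lipschitz_oneside m d2 m' d2' Hm HP Hm' HP' Hle).
  - rewrite Rabs_left by lra. rewrite (Rabs_minus_sym m), (Rabs_minus_sym (PZ d2)).
    replace (- (NE m d2 - NE m' d2')) with (NE m' d2' - NE m d2) by ring.
    apply (N_lipschitz_oneside m' d2' m d2); auto; lra.
Qed.

Lemma center_facts : 0 < PZ D /\ f2 (PZ D) = D / g2 /\ 0 < lamP f1 g1 D /\ f1 (lamP f1 g1 D) = D / g1.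
Proof.
  assert (H0 : forall r, 0 < r -> Rabs (D - D) <= r) by (intros; rewrite Rminus_diag, Rabs_R0; lra).
  destruct (HPlip D D (H0 rP HrP) (H0 rP HrP)) as [A [B _]].
  destruct (HLlip D D (H0 rL HrL) (H0 rL HrL)) as [C [E _]]. auto.
Qed.

Lemma mu_c2_pos : 0 < mu_c2.
Proof.
  destruct center_facts as [HP [_ [HL _]]]. unfold mu_c1 in Hmuc2.
  assert (0 < D * PZ D / (D * g1)) by (apply Rdiv_lt_0_compat; apply Rmult_lt_0_compat; lra). lra.
Qed.

(* Radius of a box around (mu_c2, D, D) on which all the equilibrium
   quantities are defined: mu, d1, d2 stay positive and the level points are
   controlled by the hypotheses. *)
Definition t_adm : R := Rmin (Rmin rP rL) (Rmin (D / 2) (mu_c2 / 2)).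

Notation box t m d1 d2 := (in_box mu_c2 D t m d1 d2).

Lemma t_adm_spec : 0 < t_adm /\ t_adm <= rP /\ t_adm <= rL /\ t_adm <= D / 2 /\ t_adm <= mu_c2 / 2.
Proof.
  pose proof mu_c2_pos. unfold t_adm.
  pose proof (Rmin_l (Rmin rP rL) (Rmin (D / 2) (mu_c2 / 2))).
  pose proof (Rmin_r (Rmin rP rL) (Rmin (D / 2) (mu_c2 / 2))).
  pose proof (Rmin_l rP rL). pose proof (Rmin_r rP rL).
  pose proof (Rmin_l (D / 2) (mu_c2 / 2)). pose proof (Rmin_r (D / 2) (mu_c2 / 2)).
  repeat split; try lra. repeat apply Rmin_pos; lra.
Qed.

Lemma box_adm t m d1 d2 : t <= t_adm -> box t m d1 d2 ->
  mu_c2 / 2 <= m /\ D / 2 <= d1 /\ D / 2 <= d2 /\ Rabs (d2 - D) <= rP /\ Rabs (d1 - D) <= rL.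
Proof.
  intros Ht [H1 [H2 H3]]. pose proof t_adm_spec.
  apply Rabs_le_between in H1. pose proof (proj1 (Rabs_le_between _ _) H2).
  pose proof (proj1 (Rabs_le_between _ _) H3). repeat split; lra.
Qed.

Lemma box_equilibrium t m d1 d2 : t <= t_adm -> box t m d1 d2 ->
  0 < PZ d2 /\ 0 < NE m d2 < m /\ (m - NE m d2) * D - PZ d2 * f1 (NE m d2) = 0.
Proof.
  intros Ht Hb. destruct (box_adm t m d1 d2 Ht Hb) as [Hm [_ [_ [HdP _]]]].
  destruct (HPlip d2 d2 HdP HdP) as [HP _]. pose proof mu_c2_pos.
  split; [exact HP | apply N_equilibrium; lra].
Qed.

Lemma lip_box_PZ t : t <= t_adm -> lip_box mu_c2 D t (fun _ _ d2 => PZ d2).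
Proof.
  intros Ht. exists (Rabs (PZ D) + KP * t), KP. split; [exact HKP|].
  intros m d1 d2 m' d1' d2' Hs Hs'.
  destruct (box_adm t m d1 d2 Ht Hs) as [_ [_ [_ [A _]]]].
  destruct (box_adm t m' d1' d2' Ht Hs') as [_ [_ [_ [A' _]]]].
  assert (A0 : Rabs (D - D) <= rP) by (rewrite Rminus_diag, Rabs_R0; lra).
  destruct Hs as [_ [_ Hs]]. destruct (HPlip d2 D A A0) as [_ [_ Hc]].
  destruct (HPlip d2 d2' A A') as [_ [_ Hd]]. unfold dist3.
  pose proof (Rabs_triang_inv (PZ d2) (PZ D)). pose proof (Rabs_pos (m - m')).
  pose proof (Rabs_pos (d1 - d1')). split; nra.
Qed.

Lemma lip_box_lamP t : t <= t_adm -> lip_box mu_c2 D t (fun _ d1 _ => lamP f1 g1 d1).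
Proof.
  intros Ht. exists (Rabs (lamP f1 g1 D) + KL * t), KL. split; [exact HKL|].
  intros m d1 d2 m' d1' d2' Hs Hs'.
  destruct (box_adm t m d1 d2 Ht Hs) as [_ [_ [_ [_ A]]]].
  destruct (box_adm t m' d1' d2' Ht Hs') as [_ [_ [_ [_ A']]]].
  assert (A0 : Rabs (D - D) <= rL) by (rewrite Rminus_diag, Rabs_R0; lra).
  destruct Hs as [_ [Hs _]]. destruct (HLlip d1 D A A0) as [_ [_ Hc]].
  destruct (HLlip d1 d1' A A') as [_ [_ Hd]]. unfold dist3.
  pose proof (Rabs_triang_inv (lamP f1 g1 d1) (lamP f1 g1 D)). pose proof (Rabs_pos (m - m')).
  pose proof (Rabs_pos (d2 - d2')). split; nra.
Qed.

Lemma lip_box_N t : t <= t_adm -> lip_box mu_c2 D t (fun m _ d2 => NE m d2).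
Proof.
  intros Ht. exists (mu_c2 + t), (1 + B1 * KP / D).
  assert (HB1p : 0 <= B1) by (pose proof (HB1 0 (Rle_refl 0)); rewrite Hf10 in *; lra).
  assert (0 <= B1 * KP / D) by (apply Rmult_le_pos; [nra | left; apply Rinv_0_lt_compat; lra]).
  split; [lra|]. intros m d1 d2 m' d1' d2' Hs Hs'.
  destruct (box_equilibrium t m d1 d2 Ht Hs) as [HP [HN _]].
  destruct (box_equilibrium t m' d1' d2' Ht Hs') as [HP' [HN' _]].
  destruct (box_adm t m d1 d2 Ht Hs) as [_ [_ [_ [A _]]]].
  destruct (box_adm t m' d1' d2' Ht Hs') as [_ [_ [_ [A' _]]]].
  split.
  - destruct Hs as [Hm _]. apply Rabs_le_between in Hm. rewrite Rabs_right; lra.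
  - pose proof (N_lipschitz m d2 m' d2' ltac:(lra) HP ltac:(lra) HP') as HNl.
    destruct (HPlip d2 d2' A A') as [_ [_ HPl]].
    assert (HNl' : D * Rabs (NE m d2 - NE m' d2') <= D * Rabs (m - m') + B1 * (KP * Rabs (d2 - d2')))
      by (eapply Rle_trans; [exact HNl | apply Rplus_le_compat_l, Rmult_le_compat_l; assumption]).
    apply Rmult_le_reg_l with D; [lra|]. unfold dist3.
    pose proof (Rabs_pos (m - m')). pose proof (Rabs_pos (d1 - d1')). pose proof (Rabs_pos (d2 - d2')).
    replace (D * ((1 + B1 * KP / D) * (Rabs (m - m') + Rabs (d1 - d1') + Rabs (d2 - d2'))))
      with (D * (Rabs (m - m') + Rabs (d1 - d1') + Rabs (d2 - d2'))
            + B1 * KP * (Rabs (m - m') + Rabs (d1 - d1') + Rabs (d2 - d2'))) by (field; lra).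
    assert (0 <= B1 * KP) by nra.
    assert (0 <= D * (Rabs (d1 - d1') + Rabs (d2 - d2'))) by nra.
    assert (0 <= B1 * KP * (Rabs (m - m') + Rabs (d1 - d1'))) by nra.
    nra.
Qed.

Lemma lip_box_g2_div_d2 t : t <= t_adm -> lip_box mu_c2 D t (fun _ _ d2 => g2 / d2).
Proof.
  intros Ht. apply (lip_box_div _ _ t (fun _ _ _ => g2) (fun _ _ d2 => d2) (D / 2)); auto with lip_box.
  - lra.
  - intros m d1 d2 Hb. destruct (box_adm t m d1 d2 Ht Hb) as [_ [_ [Hd2 _]]]. rewrite Rabs_right; lra.
Qed.

#[local] Hint Resolve lip_box_PZ lip_box_lamP lip_box_N lip_box_g2_div_d2 : lip_box.

(* The Jacobian at E2 as a function of the substrate value n (and of d1, d2);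
   at n = N(mu, d2) these are the entries used in charcoefs. *)
Definition Zn n d1 d2 := (g2 / d2) * PZ d2 * (g1 * f1 n - d1).
Definition j11 n (d1 d2 : R) := - D - PZ d2 * df1 n.
Definition j12 n (d1 d2 : R) := - f1 n.
Definition j21 n (d1 d2 : R) := g1 * PZ d2 * df1 n.
Definition j22 n d1 d2 := g1 * f1 n - d1 - Zn n d1 d2 * df2 (PZ d2).
Definition j23 (n d1 d2 : R) := - f2 (PZ d2).
Definition j32 n d1 d2 := g2 * Zn n d1 d2 * df2 (PZ d2).
Definition j33 (n d1 d2 : R) := g2 * f2 (PZ d2) - d2.

(* Coefficients of det(J - x I) = coef0 + coef1 x + coef2 x^2 - x^3
   (the entries j13 = j31 = 0 are kept to match charcoefs literally). *)
Definition coef2 n d1 d2 := j11 n d1 d2 + j22 n d1 d2 + j33 n d1 d2.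
Definition coef1 n d1 d2 := - ((j11 n d1 d2 * j22 n d1 d2 - j12 n d1 d2 * j21 n d1 d2)
   + (j11 n d1 d2 * j33 n d1 d2 - 0 * 0) + (j22 n d1 d2 * j33 n d1 d2 - j23 n d1 d2 * j32 n d1 d2)).
Definition coef0 n d1 d2 := j11 n d1 d2 * (j22 n d1 d2 * j33 n d1 d2 - j23 n d1 d2 * j32 n d1 d2)
   - j12 n d1 d2 * (j21 n d1 d2 * j33 n d1 d2 - j23 n d1 d2 * 0)
   + 0 * (j21 n d1 d2 * j32 n d1 d2 - j22 n d1 d2 * 0).

Definition p0 m d1 d2 := coef0 (NE m d2) d1 d2.
Definition p1 m d1 d2 := coef1 (NE m d2) d1 d2.
Definition p2 m d1 d2 := coef2 (NE m d2) d1 d2.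

Lemma charcoefs_E2 m d1 d2 :
  charcoefs f1 f2 df1 df2 D g1 g2 m d1 d2 = (p0 m d1 d2, p1 m d1 d2, p2 m d1 d2).
Proof. reflexivity. Qed.

Definition dZn n (d1 d2 : R) := (g2 / d2) * PZ d2 * (g1 * df1 n).
Definition dj11 n (d1 d2 : R) := - PZ d2 * d2f1 n.
Definition dj12 n (d1 d2 : R) := - df1 n.
Definition dj21 n (d1 d2 : R) := g1 * PZ d2 * d2f1 n.
Definition dj22 n d1 d2 := g1 * df1 n - dZn n d1 d2 * df2 (PZ d2).
Definition dj32 n d1 d2 := g2 * dZn n d1 d2 * df2 (PZ d2).
Definition dcoef2 n d1 d2 := dj11 n d1 d2 + dj22 n d1 d2.
Definition dcoef1 n d1 d2 := - ((dj11 n d1 d2 * j22 n d1 d2 + j11 n d1 d2 * dj22 n d1 d2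
     - (dj12 n d1 d2 * j21 n d1 d2 + j12 n d1 d2 * dj21 n d1 d2))
   + dj11 n d1 d2 * j33 n d1 d2 + (dj22 n d1 d2 * j33 n d1 d2 - j23 n d1 d2 * dj32 n d1 d2)).
Definition dcoef0 n d1 d2 := dj11 n d1 d2 * (j22 n d1 d2 * j33 n d1 d2 - j23 n d1 d2 * j32 n d1 d2)
   + j11 n d1 d2 * (dj22 n d1 d2 * j33 n d1 d2 - j23 n d1 d2 * dj32 n d1 d2)
   - (dj12 n d1 d2 * (j21 n d1 d2 * j33 n d1 d2) + j12 n d1 d2 * (dj21 n d1 d2 * j33 n d1 d2)).

Lemma Derive_f1 x : Derive (fun y => f1 y) x = df1 x.
Proof. apply is_derive_unique, is_derive_Reals, Hdf1. Qed.
Lemma Derive_df1 x : Derive (fun y => df1 y) x = d2f1 x.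
Proof. apply is_derive_unique, is_derive_Reals, Hd2f1. Qed.
Lemma ex_derive_f1 x : ex_derive (fun y => f1 y) x.
Proof. exists (df1 x). apply is_derive_Reals, Hdf1. Qed.
Lemma ex_derive_df1 x : ex_derive (fun y => df1 y) x.
Proof. exists (d2f1 x). apply is_derive_Reals, Hd2f1. Qed.

(* Differentiating the coefficients in n is a polynomial computation in
   f1 n, df1 n, d2f1 n. *)
Ltac unfold_entries :=
  unfold coef0, coef1, coef2, dcoef0, dcoef1, dcoef2, j11, j12, j21, j22, j23, j32, j33, Zn,
    dj11, dj12, dj21, dj22, dj32, dZn.

Ltac derive_in_n :=
  unfold_entries; apply is_derive_Reals; auto_derive;
  [repeat split; first [apply ex_derive_f1 | apply ex_derive_df1 | auto]
  | rewrite ?Derive_f1, ?Derive_df1; ring].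

Lemma coef0_derivative n d1 d2 : derivable_pt_lim (fun x => coef0 x d1 d2) n (dcoef0 n d1 d2).
Proof. derive_in_n. Qed.
Lemma coef1_derivative n d1 d2 : derivable_pt_lim (fun x => coef1 x d1 d2) n (dcoef1 n d1 d2).
Proof. derive_in_n. Qed.
Lemma coef2_derivative n d1 d2 : derivable_pt_lim (fun x => coef2 x d1 d2) n (dcoef2 n d1 d2).
Proof. derive_in_n. Qed.

(* dN/dmu, from differentiating (mu - N) D = P f1(N). *)
Definition dN m d2 := 1 / (1 + PZ d2 / D * df1 (NE m d2)).

Lemma N_continuous m d2 : 0 < m -> 0 < PZ d2 -> continuity_pt (fun x => NE x d2) m.
Proof.
  intros Hm HP. apply (continuity_pt_lipschitz _ m (m / 2) 1); [lra|].
  intros y Hy. apply Rabs_lt_between in Hy.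
  pose proof (N_lipschitz y d2 m d2 ltac:(lra) HP Hm HP) as HN.
  rewrite Rminus_diag, Rabs_R0 in HN. apply Rmult_le_reg_l with D; lra.
Qed.

(* Implicit differentiation of (mu - N) D = P f1(N), writing
   f1(N(y)) - f1(N(mu)) as a difference quotient times N(y) - N(mu). *)
Lemma N_derivative m d2 : 0 < m -> 0 < PZ d2 -> derivable_pt_lim (fun x => NE x d2) m (dN m d2).
Proof.
  intros Hm HP. set (n0 := NE m d2).
  set (Q := fun x => 1 + PZ d2 / D * diff_quot f1 (df1 n0) n0 (NE x d2)).
  assert (HQm : Q m = 1 + PZ d2 / D * df1 n0).
  { unfold Q, diff_quot. change (NE m d2) with n0.
    destruct (Req_EM_T n0 n0); [reflexivity | congruence]. }
  destruct (N_equilibrium m d2 Hm HP) as [[Hn0 _] E0]. fold n0 in Hn0, E0.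
  assert (HQ0 : 0 < Q m).
  { rewrite HQm. pose proof (Hdf1p n0 ltac:(lra)).
    assert (0 <= PZ d2 / D * df1 n0) by (apply Rmult_le_pos; [left; apply Rdiv_lt_0_compat|]; lra).
    lra. }
  unfold dN. fold n0. rewrite <- HQm.
  apply (derivable_pt_lim_implicit (fun x => NE x d2) Q (fun x => x) m 1 (m / 2)).
  - apply derivable_pt_lim_id.
  - assert (Hc : continuity_pt (fun x => diff_quot f1 (df1 n0) n0 (NE x d2)) m)
      by (apply (continuity_pt_comp (fun x => NE x d2)); [apply N_continuous; auto |
          apply diff_quot_continuous, Hdf1]).
    unfold Q. change (fun x => 1 + PZ d2 / D * diff_quot f1 (df1 n0) n0 (NE x d2))
      with (fct_cte 1 + fct_cte (PZ d2 / D) * (fun x => diff_quot f1 (df1 n0) n0 (NE x d2)))%F.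
    apply continuity_pt_plus; [apply continuity_pt_const; intros u v; reflexivity|].
    apply continuity_pt_mult; [apply continuity_pt_const; intros u v; reflexivity | exact Hc].
  - lra.
  - lra.
  - intros y Hy. apply Rabs_lt_between in Hy.
    destruct (N_equilibrium y d2 ltac:(lra) HP) as [_ Ey].
    unfold Q, diff_quot. fold n0. destruct (Req_EM_T (NE y d2) n0) as [E|NE'].
    + rewrite E in Ey |- *. rewrite Rminus_diag. assert (y = m) by nra. subst; ring.
    + set (ny := NE y d2) in *.
      replace ((ny - n0) * (1 + PZ d2 / D * ((f1 ny - f1 n0) / (ny - n0))))
        with ((ny - n0) + (PZ d2 * f1 ny - PZ d2 * f1 n0) / D)
        by (field; split; [intro Z; apply NE'; lra | lra]).
      replace (PZ d2 * f1 ny) with ((y - ny) * D) by lra.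
      replace (PZ d2 * f1 n0) with ((m - n0) * D) by lra. field. lra.
Qed.

Lemma branch_derivative (F dF : R -> R -> R -> R) m d1 d2 : 0 < m -> 0 < PZ d2 ->
  (forall n, derivable_pt_lim (fun x => F x d1 d2) n (dF n d1 d2)) ->
  derivable_pt_lim (fun x => F (NE x d2) d1 d2) m (dF (NE m d2) d1 d2 * dN m d2).
Proof.
  intros Hm HP HF.
  exact (derivable_pt_lim_comp (fun x => NE x d2) (fun x => F x d1 d2) m _ _ (N_derivative m d2 Hm HP) (HF _)).
Qed.

Definition dp0 m d1 d2 := dcoef0 (NE m d2) d1 d2 * dN m d2.
Definition dp1 m d1 d2 := dcoef1 (NE m d2) d1 d2 * dN m d2.
Definition dp2 m d1 d2 := dcoef2 (NE m d2) d1 d2 * dN m d2.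

Lemma p_derivatives m d1 d2 : 0 < m -> 0 < PZ d2 ->
  derivable_pt_lim (fun x => p0 x d1 d2) m (dp0 m d1 d2) /\
  derivable_pt_lim (fun x => p1 x d1 d2) m (dp1 m d1 d2) /\
  derivable_pt_lim (fun x => p2 x d1 d2) m (dp2 m d1 d2).
Proof.
  intros Hm HP. repeat split; apply branch_derivative; try assumption; intro n.
  - apply coef0_derivative.
  - apply coef1_derivative.
  - apply coef2_derivative.
Qed.

Ltac unfold_jacobian := unfold p0, p1, p2, dp0, dp1, dp2; unfold_entries.

(* dN/dmu is box-Lipschitz: its denominator is at least 1. *)
Lemma lip_box_dN t : t <= t_adm -> lip_box mu_c2 D t (fun m _ d2 => dN m d2).
Proof.
  intros Ht. unfold dN.
  apply (lip_box_div _ _ t (fun _ _ _ => 1) (fun m _ d2 => 1 + PZ d2 / D * df1 (NE m d2)) 1).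
  - apply lip_box_const.
  - lip_box_solve. lra.
  - lra.
  - intros m d1 d2 Hb. destruct (box_equilibrium t m d1 d2 Ht Hb) as [HP [[HN _] _]].
    pose proof (Hdf1p (NE m d2) ltac:(lra)).
    assert (0 <= PZ d2 / D * df1 (NE m d2)) by (apply Rmult_le_pos; [left; apply Rdiv_lt_0_compat|]; lra).
    rewrite Rabs_right; lra.
Qed.
#[local] Hint Resolve lip_box_dN : lip_box.

Lemma lip_box_p0 t : t <= t_adm -> lip_box mu_c2 D t p0.
Proof. intros Ht. unfold_jacobian. lip_box_solve. Qed.
Lemma lip_box_p1 t : t <= t_adm -> lip_box mu_c2 D t p1.
Proof. intros Ht. unfold_jacobian. lip_box_solve. Qed.
Lemma lip_box_p2 t : t <= t_adm -> lip_box mu_c2 D t p2.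
Proof. intros Ht. unfold_jacobian. lip_box_solve. Qed.
Lemma lip_box_dp0 t : t <= t_adm -> lip_box mu_c2 D t dp0.
Proof. intros Ht. unfold_jacobian. lip_box_solve. Qed.
Lemma lip_box_dp1 t : t <= t_adm -> lip_box mu_c2 D t dp1.
Proof. intros Ht. unfold_jacobian. lip_box_solve. Qed.
Lemma lip_box_dp2 t : t <= t_adm -> lip_box mu_c2 D t dp2.
Proof. intros Ht. unfold_jacobian. lip_box_solve. Qed.
Lemma lip_box_mu_c1 t : t <= t_adm -> lip_box mu_c2 D t (fun _ d1 d2 => mu_c1 f1 f2 D g1 g2 d1 d2).
Proof. intros Ht. unfold mu_c1. lip_box_solve. apply Rmult_integral_contrapositive; split; lra. Qed.
#[local] Hint Resolve lip_box_p0 lip_box_p1 lip_box_p2 lip_box_dp0 lip_box_dp1 lip_box_dp2 lip_box_mu_c1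
  : lip_box.

(* At (D1, D2) = (D, D) the eigenvalue -D splits off (j33 = 0, j13 = j31 = 0),
   and the trace of the remaining 2x2 block is A(mu). *)
Lemma cubic_center_root m : cubic (p0 m D D) (p1 m D D) (p2 m D D) (- D) = 0.
Proof.
  destruct center_facts as [HP [Hf _]]. unfold cubic. unfold_jacobian. rewrite Hf. field. lra.
Qed.

Lemma p2_center m : p2 m D D = Afun f1 f2 df1 df2 D g1 g2 m - D.
Proof.
  destruct center_facts as [HP [Hf _]]. unfold Afun, Zfun. unfold_jacobian. rewrite Hf. field. lra.
Qed.

Lemma p1_center m : p1 m D D = D * Afun f1 f2 df1 df2 D g1 g2 m
   - Zn (NE m D) D D * df2 (PZ D) * (PZ D * df1 (NE m D) + D).
Proof.
  destruct center_facts as [HP [Hf _]]. unfold Afun, Zfun. unfold_jacobian. rewrite Hf. field. lra.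
Qed.

(* Since mu_c2 > mu_c1(D, D), the predator level Z at the center is positive. *)
Lemma Z_center_pos : 0 < Zn (NE mu_c2 D) D D.
Proof.
  destruct center_facts as [HP [_ [HL Hf1L]]]. pose proof mu_c2_pos.
  destruct (N_equilibrium mu_c2 D ltac:(lra) HP) as [[N1 N2] E].
  set (N := NE mu_c2 D) in *. set (LP := lamP f1 g1 D) in *.
  assert (HNL : LP < N).
  { destruct (Rlt_le_dec LP N) as [X|X]; [exact X|].
    pose proof (increasing_weak f1 df1 Hdf1 Hdf1p N LP ltac:(lra) X) as M.
    unfold mu_c1 in Hmuc2. fold LP in Hmuc2.
    assert (PZ D * f1 N <= PZ D * (D / g1)) by (rewrite <- Hf1L; apply Rmult_le_compat_l; lra).
    assert (E' : mu_c2 = N + PZ D * f1 N / D) by (field_simplify; [|lra];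
      apply Rmult_eq_reg_r with D; [|lra]; field_simplify; nra).
    assert (PZ D * f1 N / D <= D * PZ D / (D * g1)).
    { replace (D * PZ D / (D * g1)) with (PZ D * (D / g1) / D) by (field; lra).
      apply Rmult_le_compat_r; [left; apply Rinv_0_lt_compat; lra | assumption]. }
    lra. }
  pose proof (increasing_strict f1 df1 Hdf1 Hdf1p LP N ltac:(lra) HNL) as Hf1N. rewrite Hf1L in Hf1N.
  unfold Zn. apply Rmult_lt_0_compat; [apply Rmult_lt_0_compat; [apply Rdiv_lt_0_compat|]; lra|].
  apply Rmult_lt_reg_r with (/ g1); [apply Rinv_0_lt_compat; lra|].
  replace ((g1 * f1 N - D) * / g1) with (f1 N - D / g1) by (field; lra). lra.
Qed.

Lemma p2_at_center : p2 mu_c2 D D = - D.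
Proof. rewrite p2_center, HA0. ring. Qed.

Lemma p1_at_center : p1 mu_c2 D D < 0.
Proof.
  rewrite p1_center, HA0. pose proof Z_center_pos. destruct center_facts as [HP _].
  pose proof mu_c2_pos. destruct (N_equilibrium mu_c2 D ltac:(lra) HP) as [[N1 _] _].
  pose proof (Hdf1p (NE mu_c2 D) ltac:(lra)). pose proof (Hdf2p (PZ D) ltac:(lra)).
  assert (0 < Zn (NE mu_c2 D) D D * df2 (PZ D) * (PZ D * df1 (NE mu_c2 D) + D))
    by (apply Rmult_lt_0_compat; [apply Rmult_lt_0_compat|]; nra).
  lra.
Qed.

(* The eigenvalue alpha near -D: the root of the characteristic cubic in
   [-D - D/28, -D + D/28], isolated as long as the cubic slopes down by at
   least D^2/2 there. *)
Definition root_radius : R := D / 28.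
Definition slope_margin : R := D * D / 2.

Definition isolated_on t : Prop := forall m d1 d2, box t m d1 d2 ->
  root_isolated (- D) root_radius slope_margin (p0 m d1 d2) (p1 m d1 d2) (p2 m d1 d2).

Definition alpha m d1 d2 := root_near (- D) root_radius (p0 m d1 d2) (p1 m d1 d2) (p2 m d1 d2).
Definition gammaE m d1 d2 := p2 m d1 d2 - alpha m d1 d2.
Definition betaE m d1 d2 := - p1 m d1 d2 - alpha m d1 d2 * gammaE m d1 d2.
Definition discE m d1 d2 := gammaE m d1 d2 ^ 2 - 4 * betaE m d1 d2.
Definition alpha_slope m d1 d2 :=
  cubic_slope (p1 m d1 d2) (p2 m d1 d2) (alpha m d1 d2) (alpha m d1 d2).
(* mu-derivative of gamma = p2 - alpha, alpha' given by implicit differentiation *)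
Definition dgammaE m d1 d2 := dp2 m d1 d2 -
  (- (dp0 m d1 d2 + dp1 m d1 d2 * alpha m d1 d2 + dp2 m d1 d2 * (alpha m d1 d2 * alpha m d1 d2)))
  / alpha_slope m d1 d2.

Section Isolated.
Variable t : R.
Hypotheses (Ht : t <= t_adm) (Hiso : isolated_on t).

Lemma alpha_spec m d1 d2 : box t m d1 d2 ->
  - D - root_radius <= alpha m d1 d2 <= - D + root_radius /\
  cubic (p0 m d1 d2) (p1 m d1 d2) (p2 m d1 d2) (alpha m d1 d2) = 0.
Proof.
  intros Hb. destruct (root_near_spec _ _ _ _ _ _ (Hiso m d1 d2 Hb)) as [H1 H2].
  apply Rabs_le_between in H1. unfold alpha. split; [lra | exact H2].
Qed.

Lemma alpha_slope_bound m d1 d2 : box t m d1 d2 -> alpha_slope m d1 d2 <= - slope_margin.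
Proof.
  intros Hb. destruct (root_near_spec _ _ _ _ _ _ (Hiso m d1 d2 Hb)) as [H1 _].
  destruct (Hiso m d1 d2 Hb) as [_ [_ [Hs _]]]. apply Hs; exact H1.
Qed.

(* alpha is box-Lipschitz, by stability of isolated roots. *)
Lemma lip_box_alpha : lip_box mu_c2 D t alpha.
Proof.
  destruct (lip_box_p0 t Ht) as [B0 [C0 [HC0 H0]]]. destruct (lip_box_p1 t Ht) as [B1' [C1 [HC1 H1]]].
  destruct (lip_box_p2 t Ht) as [B2 [C2 [HC2 H2]]].
  set (A := D + root_radius). assert (HA : 0 <= A) by (unfold A, root_radius; lra).
  assert (Hms : 0 < slope_margin) by (unfold slope_margin; nra).
  exists A, ((C0 + C1 * A + C2 * (A * A)) / slope_margin).
  split; [apply Rmult_le_pos; [nra | left; apply Rinv_0_lt_compat; lra]|].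
  intros m d1 d2 m' d1' d2' Hb Hb'.
  assert (Hbound : forall m d1 d2, box t m d1 d2 -> Rabs (alpha m d1 d2) <= A)
    by (intros ? ? ? Hb0; destruct (alpha_spec _ _ _ Hb0) as [Hr _];
        apply Rabs_le_between; unfold A, root_radius in *; lra).
  split; [exact (Hbound _ _ _ Hb)|].
  pose proof (root_near_perturb _ _ _ _ _ _ _ _ _ (Hiso _ _ _ Hb) (Hiso _ _ _ Hb')) as Hpert.
  fold (alpha m d1 d2) (alpha m' d1' d2') in Hpert.
  pose proof (cubic_coeff_diff (p0 m d1 d2) (p1 m d1 d2) (p2 m d1 d2)
                (p0 m' d1' d2') (p1 m' d1' d2') (p2 m' d1' d2') (alpha m' d1' d2')) as Hcoef.
  destruct (H0 _ _ _ _ _ _ Hb Hb') as [_ E0]. destruct (H1 _ _ _ _ _ _ Hb Hb') as [_ E1].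
  destruct (H2 _ _ _ _ _ _ Hb Hb') as [_ E2].
  pose proof (Hbound _ _ _ Hb') as Ha'. pose proof (Rabs_pos (alpha m' d1' d2')).
  pose proof (dist3_nonneg m d1 d2 m' d1' d2').
  set (dd := dist3 m d1 d2 m' d1' d2') in *. set (x := Rabs (alpha m' d1' d2')) in *.
  assert (Rabs (p1 m d1 d2 - p1 m' d1' d2') * x <= C1 * dd * A) by (apply Rmult_le_compat; auto using Rabs_pos).
  assert (Rabs (p2 m d1 d2 - p2 m' d1' d2') * (x * x) <= C2 * dd * (A * A))
    by (apply Rmult_le_compat; auto using Rabs_pos; nra).
  apply Rmult_le_reg_l with slope_margin; [exact Hms|].
  replace (slope_margin * ((C0 + C1 * A + C2 * (A * A)) / slope_margin * dd))
    with ((C0 + C1 * A + C2 * (A * A)) * dd) by (field; lra).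
  lra.
Qed.
#[local] Hint Resolve lip_box_alpha : lip_box.

Lemma lip_box_disc : lip_box mu_c2 D t discE.
Proof. unfold discE, betaE, gammaE. lip_box_solve. Qed.

Lemma lip_box_dgamma : lip_box mu_c2 D t dgammaE.
Proof.
  unfold dgammaE. apply lip_box_minus; [auto with lip_box|].
  apply (lip_box_div _ _ _ _ alpha_slope slope_margin).
  - lip_box_solve.
  - unfold alpha_slope, cubic_slope. lip_box_solve.
  - unfold slope_margin; nra.
  - intros m d1 d2 Hb. pose proof (alpha_slope_bound m d1 d2 Hb).
    unfold slope_margin in *. rewrite Rabs_left1; nra.
Qed.

Lemma gamma_identification m d1 d2 : box t m d1 d2 -> discE m d1 d2 < 0 ->
  (exists a b g, a < 0 /\ g ^ 2 - 4 * b < 0 /\ Mmap a b g = charcoefs f1 f2 df1 df2 D g1 g2 m d1 d2) /\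
  gammaF f1 f2 df1 df2 D g1 g2 d1 d2 m = gammaE m d1 d2.
Proof.
  intros Hb Hdisc. destruct (alpha_spec m d1 d2 Hb) as [Hr Hroot].
  rewrite charcoefs_E2. apply factor_gamma_root; [exact Hroot | unfold root_radius in Hr; lra | exact Hdisc].
Qed.

Lemma gamma_derivative mu d1 d2 :
  (forall m d1 d2, box t m d1 d2 -> discE m d1 d2 < 0) ->
  Rabs (mu - mu_c2) < t -> Rabs (d1 - D) <= t -> Rabs (d2 - D) <= t ->
  derivable_pt_lim (fun x => gammaF f1 f2 df1 df2 D g1 g2 d1 d2 x) mu (dgammaE mu d1 d2).
Proof.
  intros Hdisc Hm H1 H2. set (rho := t - Rabs (mu - mu_c2)). assert (Hrho : 0 < rho) by (unfold rho; lra).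
  assert (Hnear : forall y, Rabs (y - mu) < rho -> box t y d1 d2)
    by (intros y Hy; apply (in_box_shift _ _ t mu); assumption).
  assert (Hb : box t mu d1 d2) by (split; [lra | split; assumption]).
  destruct (box_equilibrium t mu d1 d2 Ht Hb) as [HP _]. pose proof mu_c2_pos.
  destruct (box_adm t mu d1 d2 Ht Hb) as [Hmu _].
  destruct (p_derivatives mu d1 d2 ltac:(lra) HP) as [Dp0 [Dp1 Dp2]].
  apply (derivable_pt_lim_local (fun x => p2 x d1 d2 - alpha x d1 d2) _ mu _ rho Hrho).
  - intros y Hy. exact (proj2 (gamma_identification y d1 d2 (Hnear y Hy) (Hdisc y d1 d2 (Hnear y Hy)))).
  - apply derivable_pt_lim_minus; [exact Dp2|].
    apply (cubic_root_derivative (fun x => p0 x d1 d2) (fun x => p1 x d1 d2) (fun x => p2 x d1 d2)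
             (fun x => alpha x d1 d2) mu rho); try assumption.
    + intros y Hy. exact (proj2 (alpha_spec y d1 d2 (Hnear y Hy))).
    + exact (lip_box_continuous_m _ _ t _ mu d1 d2 (lip_box_p1 t Ht) Hm H1 H2).
    + exact (lip_box_continuous_m _ _ t _ mu d1 d2 (lip_box_p2 t Ht) Hm H1 H2).
    + exact (lip_box_continuous_m _ _ t _ mu d1 d2 lip_box_alpha Hm H1 H2).
    + pose proof (alpha_slope_bound mu d1 d2 Hb). unfold alpha_slope, slope_margin in *. nra.
Qed.

(* On the diagonal d1 = d2 = D, alpha = -D, so gamma = p2 + D = A. *)
Lemma alpha_center m : box t m D D -> alpha m D D = - D.
Proof.
  intros Hb. symmetry. apply (root_near_unique _ _ slope_margin _ _ _ _ (Hiso m D D Hb)).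
  - replace (- D - - D) with 0 by ring. rewrite Rabs_R0. unfold root_radius; lra.
  - apply cubic_center_root.
Qed.

Lemma A_derivative mu : (forall m d1 d2, box t m d1 d2 -> discE m d1 d2 < 0) ->
  Rabs (mu - mu_c2) < t ->
  derivable_pt_lim (fun m => Afun f1 f2 df1 df2 D g1 g2 m) mu (dgammaE mu D D).
Proof.
  intros Hdisc Hm.
  assert (H0 : Rabs (D - D) <= t) by (rewrite Rminus_diag, Rabs_R0; pose proof (Rabs_pos (mu - mu_c2)); lra).
  apply (derivable_pt_lim_local (fun x => gammaF f1 f2 df1 df2 D g1 g2 D D x) _ mu _ (t - Rabs (mu - mu_c2)));
    [lra | | exact (gamma_derivative mu D D Hdisc Hm H0 H0)].
  intros y Hy. assert (Hb : box t y D D) by (apply (in_box_shift _ _ t mu); assumption).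
  rewrite (proj2 (gamma_identification y D D Hb (Hdisc y D D Hb))).
  unfold gammaE. rewrite (alpha_center y Hb), p2_center. ring.
Qed.

End Isolated.

(* Isolation of alpha follows from closeness of the coefficients to their
   values at the center, where p2 = -D and p1 < 0. *)
Definition center_dev m d1 d2 :=
  Rabs (p0 m d1 d2 - p0 mu_c2 D D) + D * Rabs (p1 m d1 d2 - p1 mu_c2 D D)
  + D * D * Rabs (p2 m d1 d2 - p2 mu_c2 D D).

Lemma isolation_criterion m d1 d2 : center_dev m d1 d2 < D * D * D / 56 ->
  root_isolated (- D) root_radius slope_margin (p0 m d1 d2) (p1 m d1 d2) (p2 m d1 d2).
Proof.
  unfold center_dev. rewrite p2_at_center. pose proof p1_at_center as Hp1c.
  set (e0 := p0 m d1 d2 - p0 mu_c2 D D). set (e1 := p1 m d1 d2 - p1 mu_c2 D D).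
  set (e2 := p2 m d1 d2 - - D). intros Hdev.
  pose proof (Rabs_pos e0). pose proof (Rabs_pos e1). pose proof (Rabs_pos e2).
  assert (He1 : Rabs e1 < D * D / 56) by nra. assert (He2 : Rabs e2 < D / 56) by nra.
  unfold root_isolated, root_radius, slope_margin. repeat split; try nra.
  - intros x y Hx Hy. apply Rabs_le_between in Hx, Hy.
    assert (Hxy : Rabs (x + y) <= 3 * D) by (apply Rabs_le_between; lra).
    assert (e2 * (x + y) <= D / 56 * (3 * D)).
    { eapply Rle_trans; [apply Rle_abs|]. rewrite Rabs_mult.
      apply Rmult_le_compat; [apply Rabs_pos | apply Rabs_pos | lra | exact Hxy]. }
    apply Rabs_lt_between in He1.
    set (u := x - - D) in *. set (w := y - - D) in *.
    replace (cubic_slope (p1 m d1 d2) (p2 m d1 d2) x y)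
      with (p1 mu_c2 D D - D * D + e1 + e2 * (x + y) + 2 * D * (u + w) - (u * u + u * w + w * w))
      by (unfold cubic_slope, e1, e2, u, w; ring).
    assert (0 <= u * u + u * w + w * w) by nra.
    nra.
  - pose proof (cubic_coeff_diff (p0 m d1 d2) (p1 m d1 d2) (p2 m d1 d2)
                  (p0 mu_c2 D D) (p1 mu_c2 D D) (p2 mu_c2 D D) (- D)) as Hc.
    rewrite cubic_center_root, Rminus_0_r, p2_at_center, Rabs_Ropp, (Rabs_right D) in Hc by lra.
    fold e0 e1 e2 in Hc. lra.
Qed.

Lemma isolation_radius : exists t, 0 < t /\ t <= t_adm /\ isolated_on t.
Proof.
  destruct t_adm_spec as [Ht0 _].
  assert (Hdev : lip_box mu_c2 D t_adm center_dev)
    by (assert (t_adm <= t_adm) by lra; unfold center_dev; lip_box_solve).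
  destruct (lip_box_near_center _ _ t_adm _ (D * D * D / 56) Ht0 Hdev) as [t [[Ht Ht'] Hnear]].
  { apply Rdiv_lt_0_compat; [repeat apply Rmult_lt_0_compat|]; lra. }
  exists t. split; [exact Ht|]. split; [exact Ht'|].
  intros m d1 d2 Hb. apply isolation_criterion.
  specialize (Hnear m d1 d2 Hb). unfold center_dev in Hnear at 2.
  rewrite !Rminus_diag, !Rabs_R0, !Rmult_0_r, !Rplus_0_r, Rminus_0_r in Hnear.
  pose proof (Rle_abs (center_dev m d1 d2)). lra.
Qed.

Lemma admissible_box : exists t, 0 < t /\ t <= t_adm /\ isolated_on t /\
  (forall m d1 d2, box t m d1 d2 -> discE m d1 d2 < 0) /\
  (forall m d1 d2, box t m d1 d2 -> mu_c1 f1 f2 D g1 g2 d1 d2 < m).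
Proof.
  destruct isolation_radius as [t1 [Ht1 [Ht1a Hiso1]]].
  assert (Hc : box t1 mu_c2 D D) by (unfold in_box; rewrite !Rminus_diag, !Rabs_R0; lra).
  assert (Hdisc_c : discE mu_c2 D D = 4 * p1 mu_c2 D D).
  { unfold discE, betaE, gammaE. rewrite (alpha_center t1 Hiso1 mu_c2 Hc), p2_at_center. ring. }
  pose proof p1_at_center as Hp1c.
  destruct (lip_box_near_center _ _ t1 _ (- (4 * p1 mu_c2 D D)) Ht1 (lip_box_disc t1 Ht1a Hiso1))
    as [t2 [[Ht2 Ht2'] Hdisc]]; [lra|].
  assert (Hgap : lip_box mu_c2 D t1 (fun m d1 d2 => mu_c1 f1 f2 D g1 g2 d1 d2 - m))
    by (lip_box_solve; lra).
  destruct (lip_box_near_center _ _ t1 _ (mu_c2 - mu_c1 f1 f2 D g1 g2 D D) Ht1 Hgap)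
    as [t3 [[Ht3 Ht3'] Hmu]]; [lra|].
  exists (Rmin t2 t3). pose proof (Rmin_l t2 t3). pose proof (Rmin_r t2 t3).
  split; [apply Rmin_pos; lra|]. split; [lra|]. split; [|split].
  - intros m d1 d2 Hb. apply Hiso1, (in_box_mono _ _ t1 (Rmin t2 t3)); [lra | exact Hb].
  - intros m d1 d2 Hb. specialize (Hdisc m d1 d2 (in_box_mono _ _ t2 (Rmin t2 t3) _ _ _ ltac:(lra) Hb)).
    rewrite Hdisc_c in Hdisc. apply Rabs_lt_between in Hdisc. lra.
  - intros m d1 d2 Hb. specialize (Hmu m d1 d2 (in_box_mono _ _ t3 (Rmin t2 t3) _ _ _ ltac:(lra) Hb)).
    apply Rabs_lt_between in Hmu. lra.
Qed.

Theorem gamma_derivative_estimate : exists dhat eps C, 0 < dhat /\ 0 < eps /\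
    forall mu D1 D2,
      mu_c2 - dhat <= mu <= mu_c2 + dhat ->
      sqrt ((D1 - D) ^ 2 + (D2 - D) ^ 2) < eps ->
      mu_c1 f1 f2 D g1 g2 D1 D2 < mu /\
      (exists a b g, a < 0 /\ g ^ 2 - 4 * b < 0 /\
         Mmap a b g = charcoefs f1 f2 df1 df2 D g1 g2 mu D1 D2) /\
      exists dg dA,
        derivable_pt_lim (fun m => gammaF f1 f2 df1 df2 D g1 g2 D1 D2 m) mu dg /\
        derivable_pt_lim (fun m => Afun f1 f2 df1 df2 D g1 g2 m) mu dA /\
        Rabs (dg - dA) <= C * sqrt ((D1 - D) ^ 2 + (D2 - D) ^ 2).
Proof.
  destruct admissible_box as [t [Ht [Hta [Hiso [Hdisc Hmu]]]]].
  destruct (lip_box_dgamma t Hta Hiso) as [Bg [Cg [HCg Hlip]]].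
  exists (t / 2), (t / 2), (2 * Cg). split; [lra|]. split; [lra|].
  intros mu D1 D2 Hm Hnorm. set (rho := sqrt ((D1 - D) ^ 2 + (D2 - D) ^ 2)) in *.
  destruct (Rabs_le_norm2 (D1 - D) (D2 - D)) as [HD1 HD2]. fold rho in HD1, HD2.
  assert (Hm' : Rabs (mu - mu_c2) < t) by (apply Rabs_lt_between; lra).
  assert (Hb : box t mu D1 D2) by (repeat split; lra).
  assert (HbD : box t mu D D) by (unfold in_box; rewrite Rminus_diag, Rabs_R0; repeat split; lra).
  split; [exact (Hmu mu D1 D2 Hb)|].
  split; [exact (proj1 (gamma_identification t Hiso mu D1 D2 Hb (Hdisc mu D1 D2 Hb)))|].
  exists (dgammaE mu D1 D2), (dgammaE mu D D). split; [|split].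
  - apply (gamma_derivative t Hta Hiso); [exact Hdisc | exact Hm' | lra | lra].
  - exact (A_derivative t Hta Hiso mu Hdisc Hm').
  - destruct (Hlip _ _ _ _ _ _ Hb HbD) as [_ Hd]. eapply Rle_trans; [exact Hd|].
    unfold dist3. rewrite Rminus_diag, Rabs_R0. nra.
Qed.

End FoodChain.

Theorem lemma3p7
  (D g1 g2 : R) (f1 df1 d2f1 d3f1 f2 df2 d2f2 : R -> R) (L1 L2 mu_c2 : R)
  (HD : 0 < D) (Hg1 : 0 < g1) (Hg2 : 0 < g2)
  (* f1 is C^3, f2 is C^2 (functions on R whose restrictions to [0,oo) are the f_i) *)
  (Hdf1 : forall x, derivable_pt_lim f1 x (df1 x))
  (Hd2f1 : forall x, derivable_pt_lim df1 x (d2f1 x))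
  (Hd3f1 : forall x, derivable_pt_lim d2f1 x (d3f1 x))
  (Hc3f1 : continuity d3f1)
  (Hdf2 : forall x, derivable_pt_lim f2 x (df2 x))
  (Hd2f2 : forall x, derivable_pt_lim df2 x (d2f2 x))
  (Hc2f2 : continuity d2f2)
  (* f_i : [0,oo) -> [0,oo) bounded, f_i(0) = 0, f_i' > 0 *)
  (Hf1nn : forall x, 0 <= x -> 0 <= f1 x)
  (Hf2nn : forall x, 0 <= x -> 0 <= f2 x)
  (Hf1b : exists B, forall x, 0 <= x -> f1 x <= B)
  (Hf2b : exists B, forall x, 0 <= x -> f2 x <= B)
  (Hf10 : f1 0 = 0) (Hf20 : f2 0 = 0)
  (Hdf1p : forall x, 0 <= x -> 0 < df1 x)
  (Hdf2p : forall x, 0 <= x -> 0 < df2 x)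
  (* lim f1 > d/g1, lim f2 > d/g2 for all d in a neighborhood of D *)
  (HL1 : lim_infty f1 L1) (HL2 : lim_infty f2 L2)
  (Hlim : exists eps, 0 < eps /\
     forall d, Rabs (d - D) < eps -> d / g1 < L1 /\ d / g2 < L2)
  (* D/(g2 lambda_Z(D)) > f2'(lambda_Z(D)) *)
  (Hstab : df2 (lamZ f2 g2 D) < D / (g2 * lamZ f2 g2 D))
  (* mu_c2 > mu_c1(D,D) is a zero of A *)
  (Hmuc2 : mu_c1 f1 f2 D g1 g2 D D < mu_c2)
  (HA0 : Afun f1 f2 df1 df2 D g1 g2 mu_c2 = 0) :
  exists dhat eps C, 0 < dhat /\ 0 < eps /\
    forall mu D1 D2,
      mu_c2 - dhat <= mu <= mu_c2 + dhat ->
      sqrt ((D1 - D) ^ 2 + (D2 - D) ^ 2) < eps ->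
      (* gamma(D1,D2)(mu) is defined *)
      mu_c1 f1 f2 D g1 g2 D1 D2 < mu /\
      (exists a b g, a < 0 /\ g ^ 2 - 4 * b < 0 /\
         Mmap a b g = charcoefs f1 f2 df1 df2 D g1 g2 mu D1 D2) /\
      (* differentiable in mu, with the derivative estimate *)
      exists dg dA,
        derivable_pt_lim (fun m => gammaF f1 f2 df1 df2 D g1 g2 D1 D2 m) mu dg /\
        derivable_pt_lim (fun m => Afun f1 f2 df1 df2 D g1 g2 m) mu dA /\
        Rabs (dg - dA) <= C * sqrt ((D1 - D) ^ 2 + (D2 - D) ^ 2).
Proof.
  destruct Hlim as [e0 [He0 Hadm]].
  destruct (level_point_lipschitz f2 df2 g2 L2 Hdf2 (fun x => derivable_continuous_pt_lim _ _ _ (Hd2f2 x))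
              Hdf2p Hf20 Hg2 HL2 D e0 HD He0) as [rP [KP [HrP [HKP HPlip]]]];
    [intros d Hd; exact (proj2 (Hadm d Hd))|].
  destruct (level_point_lipschitz f1 df1 g1 L1 Hdf1 (fun x => derivable_continuous_pt_lim _ _ _ (Hd2f1 x))
              Hdf1p Hf10 Hg1 HL1 D e0 HD He0) as [rL [KL [HrL [HKL HLlip]]]];
    [intros d Hd; exact (proj1 (Hadm d Hd))|].
  destruct Hf1b as [B1 HB1].
  exact (gamma_derivative_estimate D g1 g2 f1 df1 d2f1 d3f1 f2 df2 d2f2 mu_c2 HD Hg1 Hg2
    Hdf1 Hd2f1 Hd3f1 Hc3f1 Hdf2 Hd2f2 Hc2f2 Hf10 Hdf1p Hdf2p Hmuc2 HA0
    rP KP rL KL B1 HrP HKP HrL HKL HPlip HLlip HB1).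
Qed.
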